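(* Let $(a_n)_{\mathrm c}=[a_{n\varepsilon}]_{\mathrm c}=[\hat a_{n\varepsilon}]_{\mathrm c}\in\widetilde{\mathbb C}_{\mathrm c}$, $z=[z_\varepsilon]=[\hat z_\varepsilon]\in\widetilde{\mathbb C}$ and $c=[c_\varepsilon]=[\hat c_\varepsilon]\in\widetilde{\mathbb C}$, and assume $z\in S((a_n)_{\mathrm c},c)$. Then: (i) the representatives $(a_{n\varepsilon})_{n,\varepsilon}$, $(z_\varepsilon)$, $(c_\varepsilon)$ (and likewise any other choice of representatives) satisfy all the conditions (a), (b), (c) in the definition of the set of convergence; (ii) $[a_{n\varepsilon}(z_\varepsilon-c_\varepsilon)^n]_{\mathrm s}=[\hat a_{n\varepsilon}(\hat z_\varepsilon-\hat c_\varepsilon)^n]_{\mathrm s}$ in $\widetilde{\mathbb C}_{\mathrm s}$.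
   Context: Fix $I=(0,1]$ and a gauge $\rho=(\rho_\varepsilon)_{\varepsilon\in I}$ with $\rho_\varepsilon\in I$ and $\rho_\varepsilon\to0$ as $\varepsilon\to0$. ''$\forall^0\varepsilon$'' means ''for all sufficiently small $\varepsilon\in I$''. A net $(x_\varepsilon)\in\mathbb C^I$ is $\rho$-moderate ($(x_\varepsilon)\in\mathbb C_\rho$) if $\exists N\in\mathbb N\,\forall^0\varepsilon:|x_\varepsilon|\le\rho_\varepsilon^{-N}$, and $\rho$-negligible if $\forall q\in\mathbb N\,\forall^0\varepsilon:|x_\varepsilon|\le\rho_\varepsilon^q$. $\widetilde{\mathbb C}:=\mathbb C_\rho/\{\text{negligible nets}\}$ with classes $[x_\varepsilon]$; $\widetilde{\mathbb R}\subseteq\widetilde{\mathbb C}$ consists of classes of real moderate nets; $\mathrm d\rho:=[\rho_\varepsilon]$, $|[z_\varepsilon]|:=[|z_\varepsilon|]$. On $\widetilde{\mathbb R}$: $[x_\varepsilon]\le[y_\varepsilon]$ iff $x_\varepsilon\le y_\varepsilon+z_\varepsilon$ $\forall^0\varepsilon$ for some negligible $(z_\varepsilon)$; $x<y$ iff $\exists m\,\forall^0\varepsilon:y_\varepsilon-x_\varepsilon>\rho_\varepsilon^m$. Hypernatural numbers: $\widetilde{\mathbb N}:=\{[n_\varepsilon]\in\widetilde{\mathbb R}:n_\varepsilon\in\mathbb N\ \forall\varepsilon\}$; for each $N\in\widetilde{\mathbb N}$ a representative $(\mathrm{ni}(N)_\varepsilon)$ with all $\mathrm{ni}(N)_\varepsilon\in\mathbb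 N$ is fixed. Hyperlimit: $l=\lim_{n\in\widetilde{\mathbb N}}a_n$ means $\forall q\,\exists M\in\widetilde{\mathbb N}\,\forall n\in\widetilde{\mathbb N}:n\ge M\Rightarrow|a_n-l|<\mathrm d\rho^q$. Hyperseries: a net $(a_{n\varepsilon})_{n\in\mathbb N,\varepsilon\in I}$ is moderate over hypersums if for every $N\in\widetilde{\mathbb N}$ the net $(\sum_{n=0}^{\mathrm{ni}(N)_\varepsilon}a_{n\varepsilon})_\varepsilon$ is $\rho$-moderate; two such nets are equivalent if for all $N,M\in\widetilde{\mathbb N}$ the net $(\sum_{n=\mathrm{ni}(N)_\varepsilon}^{\mathrm{ni}(M)_\varepsilon}(a_{n\varepsilon}-\bar a_{n\varepsilon}))_\varepsilon$ is negligible; the quotient is $\widetilde{\mathbb C}_{\mathrm s}$ with classes $[a_{n\varepsilon}]_{\mathrm s}$. $\sum_{n=N}^Ma_n:=[\sum_{n=\mathrm{ni}(N)_\varepsilon}^{\mathrm{ni}(M)_\varepsilon}a_{n\varepsilon}]$, and $\sum_{n\in\widetilde{\mathbb N}}a_n:=\lim_{N\in\widetilde{\mathbb N}}\sum_{n=0}^Na_n$ when this hyperlimit exists (convergence). Coefficients: $\widetilde{\mathbb C}_{\mathrm c}$ is the set of weakly $\rho$-moderate nets $(a_{n\varepsilon})$ ($\exists Q,R\in\mathbb N\,\forall^0\varepsilon\,\forall n\in\mathbb N:|a_{n\varepsilon}|\le\rho_\varepsilon^{-nQ-R}$) modulo strong equivalence ($\forall q,r\,\forall^0\varepsilon\,\forall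 n:|a_{n\varepsilon}-\bar a_{n\varepsilon}|\le\rho_\varepsilon^{nq+r}$), classes $(a_n)_{\mathrm c}=[a_{n\varepsilon}]_{\mathrm c}$. $\widetilde{\mathbb R}_\infty:=(\mathbb R\cup\{\pm\infty\})^I/\sim_\rho$ (same negligibility relation), ordered by $x\le y$ iff some representatives satisfy $x_\varepsilon\le y_\varepsilon$ $\forall^0\varepsilon$, and for $x\in\widetilde{\mathbb R}$, $x<y$ iff $\exists m\,\forall^0\varepsilon:y_\varepsilon>x_\varepsilon+\rho_\varepsilon^m$. Radius: $\mathrm{rad}(a_n)_{\mathrm c}:=[(\limsup_n|a_{n\varepsilon}|^{1/n})^{-1}]\in\widetilde{\mathbb R}_\infty$. Set of convergence: $S((a_n)_{\mathrm c},c)$ is the set of $z\in\widetilde{\mathbb C}$ with $|z-c|<\mathrm{rad}(a_n)_{\mathrm c}$ for which there exist representatives $z=[z_\varepsilon]$, $c=[c_\varepsilon]$, $(a_n)_{\mathrm c}=[a_{n\varepsilon}]_{\mathrm c}$ such that: (a) the net $(a_{n\varepsilon}(z_\varepsilon-c_\varepsilon)^n)_{n,\varepsilon}$ is moderate over hypersums (its class $(a_n(z-c)^n)_n\in\widetilde{\mathbb C}_{\mathrm s}$ is called a formal hyperpower series); (b) the hyperseries $\sum_{n\in\widetilde{\mathbb N}}a_n(z-c)^n$ converges and equals $[\sum_{n=0}^{\infty}a_{n\varepsilon}(z_\varepsilon-c_\varepsilon)^n]$ (these ordinary series converging for small $\varepsilon$ to a moderate net); (c) for every representative $z=[\hat z_\varepsilon]$,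 the net $(\sum_{n\ge1}na_{n\varepsilon}(\hat z_\varepsilon-c_\varepsilon)^{n-1})_\varepsilon$ is $\rho$-moderate. *)

From Stdlib Require Import Reals.
From Coquelicot Require Import Coquelicot.
Open Scope R_scope.

(* Nets are total functions R -> _, only their values on I = (0,1] matter. *)

(* "forall^0 eps : P eps" : for all sufficiently small eps in I = (0,1] *)
Definition ev0 (P : R -> Prop) : Prop :=
  exists e0 : R, 0 < e0 <= 1 /\ forall e : R, 0 < e < e0 -> P e.

Definition is_gauge (rho : R -> R) : Prop :=
  (forall e, 0 < e <= 1 -> 0 < rho e <= 1) /\
  (forall d, 0 < d -> ev0 (fun e => rho e < d)).

Definition moderateR (rho : R -> R) (x : R -> R) : Prop :=
  exists N : nat, ev0 (fun e => Rabs (x e) <= / (rho e ^ N)).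
Definition negligibleR (rho : R -> R) (x : R -> R) : Prop :=
  forall q : nat, ev0 (fun e => Rabs (x e) <= rho e ^ q).
Definition moderateC (rho : R -> R) (x : R -> C) : Prop :=
  moderateR rho (fun e => Cmod (x e)).
Definition negligibleC (rho : R -> R) (x : R -> C) : Prop :=
  negligibleR rho (fun e => Cmod (x e)).
Definition eqC (rho : R -> R) (x y : R -> C) : Prop :=
  negligibleC rho (fun e => (x e - y e)%C).

Definition leR (rho : R -> R) (x y : R -> R) : Prop :=
  exists z : R -> R, negligibleR rho z /\ ev0 (fun e => x e <= y e + z e).
Definition ltR (rho : R -> R) (x y : R -> R) : Prop :=
  exists m : nat, ev0 (fun e => y e - x e > rho e ^ m).

Definition hypnat (rho : R -> R) (n : R -> nat) : Prop :=
  moderateR rho (fun e => INR (n e)).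

Definition hsum (a : nat -> R -> C) (N M : R -> nat) : R -> C :=
  fun e => sum_n_m (fun n => a n e) (N e) (M e).

Definition mod_hsums (rho : R -> R) (a : nat -> R -> C) : Prop :=
  forall N, hypnat rho N -> moderateC rho (hsum a (fun _ => 0%nat) N).

(* equivalence defining the quotient C~_s *)
Definition eq_s (rho : R -> R) (a b : nat -> R -> C) : Prop :=
  forall N M, hypnat rho N -> hypnat rho M ->
    negligibleC rho (hsum (fun n e => (a n e - b n e)%C) N M).

Definition hyperlim (rho : R -> R) (s : (R -> nat) -> R -> C) (l : R -> C) : Prop :=
  forall q : nat, exists M, hypnat rho M /\
    forall n, hypnat rho n ->
      leR rho (fun e => INR (M e)) (fun e => INR (n e)) ->
      ltR rho (fun e => Cmod (s n e - l e)%C) (fun e => rho e ^ q).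

Definition hyperseries_to (rho : R -> R) (a : nat -> R -> C) (l : R -> C) : Prop :=
  hyperlim rho (fun N => hsum a (fun _ => 0%nat) N) l.

Definition series_to (f : nat -> C) (l : C) : Prop :=
  forall eps : R, 0 < eps -> exists N : nat, forall n : nat, (N <= n)%nat ->
    Cmod (sum_n_m f 0 n - l)%C < eps.

Definition weakly_moderate (rho : R -> R) (a : nat -> R -> C) : Prop :=
  exists Q R0 : nat, ev0 (fun e => forall n : nat,
    Cmod (a n e) <= / (rho e ^ (n * Q + R0))).
Definition strong_eq (rho : R -> R) (a b : nat -> R -> C) : Prop :=
  forall q r : nat, ev0 (fun e => forall n : nat,
    Cmod (a n e - b n e)%C <= rho e ^ (n * q + r)).

(* nonnegative n-th root x^(1/n) of x >= 0 (with 0^(1/n) = 0) *)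
Definition nroot (n : nat) (x : R) : R :=
  match Rle_dec x 0 with left _ => 0 | right _ => Rpower x (/ INR n) end.

(* inversion on [0, +oo], with 1/0 = +oo and 1/(+oo) = 0 *)
Definition rbar_inv (x : Rbar) : Rbar :=
  match x with
  | Finite r => if Req_EM_T r 0 then p_infty else Finite (/ r)
  | _ => Finite 0
  end.

(* representative of rad (a_n)_c : eps |-> (limsup_n |a_{n eps}|^(1/n))^(-1) *)
Definition rad_net (a : nat -> R -> C) : R -> Rbar :=
  fun e => rbar_inv (LimSup_seq (fun n => nroot n (Cmod (a n e)))).

Definition ltRinf (rho : R -> R) (x : R -> R) (y : R -> Rbar) : Prop :=
  exists m : nat, ev0 (fun e => Rbar_lt (Finite (x e + rho e ^ m)) (y e)).

Definition pterms (a : nat -> R -> C) (z c : R -> C) : nat -> R -> C :=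
  fun n e => (a n e * Cpow (z e - c e) n)%C.

Definition condA (rho : R -> R) (a : nat -> R -> C) (z c : R -> C) : Prop :=
  mod_hsums rho (pterms a z c).
Definition condB (rho : R -> R) (a : nat -> R -> C) (z c : R -> C) : Prop :=
  exists l : R -> C, moderateC rho l /\
    ev0 (fun e => series_to (fun n => pterms a z c n e) (l e)) /\
    hyperseries_to rho (pterms a z c) l.
Definition condC (rho : R -> R) (a : nat -> R -> C) (z c : R -> C) : Prop :=
  forall zh : R -> C, eqC rho zh z ->
    exists d : R -> C, moderateC rho d /\
      ev0 (fun e => series_to
        (fun n => (RtoC (INR n) * a n e * Cpow (zh e - c e) (n - 1))%C) (d e)).

Definition in_S (rho : R -> R) (a : nat -> R -> C) (z c : R -> C) : Prop :=
  (exists a' z' c', strong_eq rho a a' /\ eqC rho z z' /\ eqC rho c c' /\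
     ltRinf rho (fun e => Cmod (z' e - c' e)%C) (rad_net a')) /\
  (exists a' z' c', strong_eq rho a a' /\ eqC rho z z' /\ eqC rho c c' /\
     condA rho a' z' c' /\ condB rho a' z' c' /\ condC rho a' z' c').

(** Fix representatives [a1, z1, c1] satisfying (a)-(c), and [a2, z2, c2] with
    [|z2 - c2| < rad(a2)]; let [b, y, d] be any other representatives and put [u = y - d],
    [u1 = z1 - c1], so that [u - u1] is negligible.  Strong equivalence makes [b_n - a1_n] smaller
    than [rho^(nq)] for every [q], so the coefficient differences contribute negligibly to all
    sums.  The remaining hypersum [sum_(n<=K) a1_n (u^n - u1^n)] is negligible: near the origin by
    the weak moderateness of the coefficients, away from it by summation by parts against the
    partial sums of [a1_n u1^n], which (a) makes moderate.  For the infinite sums, the radius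
    condition gives a summable majorant on a disc containing [u] and [u1], and a discrete mean
    value inequality bounds [F(u) - F(u1)] by [|u - u1|] times the derivative series at an
    intermediate point, which (c) makes moderate. *)

From Stdlib Require Import Reals Lra Lia ClassicalEpsilon.
From Coquelicot Require Import Coquelicot.
Open Scope R_scope.

Lemma ev0_and (P Q : R -> Prop) : ev0 P -> ev0 Q -> ev0 (fun e => P e /\ Q e).
Proof.
  intros [e1 [H1 P1]] [e2 [H2 Q1]]. exists (Rmin e1 e2). split.
  - split; [apply Rmin_glb_lt; lra|]. apply Rle_trans with e1; [apply Rmin_l|lra].
  - intros e He. split; [apply P1|apply Q1]; split; try lra;
      apply Rlt_le_trans with (Rmin e1 e2); try lra; [apply Rmin_l|apply Rmin_r].
Qed.

Lemma ev0_impl (P Q : R -> Prop) :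
  ev0 P -> (forall e, 0 < e < 1 -> P e -> Q e) -> ev0 Q.
Proof.
  intros [e1 [H1 P1]] HPQ. exists e1. split; auto.
  intros e He. apply HPQ; [lra|]. apply P1; auto.
Qed.

Lemma ev0_always (P : R -> Prop) : (forall e, 0 < e < 1 -> P e) -> ev0 P.
Proof. intros H. exists 1. split; [lra|]. intros; apply H; lra. Qed.

Lemma gauge_le_quarter rho : is_gauge rho -> ev0 (fun e => 0 < rho e <= /4).
Proof.
  intros [Hrange Hlim]. apply ev0_impl with (fun e => rho e < /4 /\ 0 < rho e <= 1).
  - apply ev0_and; [apply Hlim; lra|]. apply ev0_always. intros e He; apply Hrange; lra.
  - intros e _ [A B]; lra.
Qed.

Lemma pow_le_one x n : 0 <= x <= 1 -> x ^ n <= 1.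
Proof.
  intros H. induction n; simpl; [lra|].
  assert (0 <= x ^ n) by (apply pow_le; lra). nra.
Qed.

Lemma Csum_n_S (f : nat -> C) N : sum_n f (S N) = (sum_n f N + f (S N))%C :> C.
Proof. exact (sum_Sn f N). Qed.

Lemma Rsum_n_S (f : nat -> R) N : sum_n f (S N) = sum_n f N + f (S N) :> R.
Proof. exact (sum_Sn f N). Qed.

Lemma Csum_n_plus (f g : nat -> C) N :
  sum_n (fun n => f n + g n)%C N = (sum_n f N + sum_n g N)%C :> C.
Proof. induction N; [rewrite !sum_O; auto|rewrite !Csum_n_S, IHN; ring]. Qed.

Lemma Csum_n_minus (f g : nat -> C) N :
  sum_n (fun n => f n - g n)%C N = (sum_n f N - sum_n g N)%C :> C.
Proof. induction N; [rewrite !sum_O; auto|rewrite !Csum_n_S, IHN; ring]. Qed.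

Lemma Csum_n_scal (k : C) (f : nat -> C) N :
  sum_n (fun n => k * f n)%C N = (k * sum_n f N)%C :> C.
Proof. induction N; [rewrite !sum_O; auto|rewrite !Csum_n_S, IHN; ring]. Qed.

Lemma Csum_n_ext_loc (f g : nat -> C) N :
  (forall n, (n <= N)%nat -> f n = g n) -> sum_n f N = sum_n g N :> C.
Proof. apply sum_n_ext_loc. Qed.

Lemma Cmod_sum_n_le (f : nat -> C) (b : nat -> R) N :
  (forall n, (n <= N)%nat -> Cmod (f n) <= b n) -> Cmod (sum_n f N) <= sum_n b N.
Proof.
  intros H; induction N.
  - rewrite !sum_O; auto.
  - rewrite Csum_n_S, Rsum_n_S. eapply Rle_trans; [apply Cmod_triangle|].
    apply Rplus_le_compat; auto.
Qed.

Lemma sum_n_geom_half_le (k : R) N : 0 <= k -> sum_n (fun n => k * (/2) ^ n) N <= 2 * k.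
Proof.
  intros Hk. assert (E : sum_n (fun n => k * (/2) ^ n) N = k * (2 - (/2) ^ N) :> R).
  { induction N; [rewrite sum_O; simpl; lra|rewrite Rsum_n_S, IHN; cbn [pow]; field]. }
  rewrite E. assert (0 < (/2) ^ N) by (apply pow_lt; lra). nra.
Qed.

Lemma series_to_sum_n f l : series_to f l <->
  forall eps, 0 < eps -> exists N, forall n, (N <= n)%nat -> Cmod (sum_n f n - l) < eps.
Proof. reflexivity. Qed.

Lemma series_to_unique f l1 l2 : series_to f l1 -> series_to f l2 -> l1 = l2.
Proof.
  rewrite !series_to_sum_n. intros H1 H2.
  cut ((l1 - l2)%C = 0%C).
  { intros H. replace l1 with ((l1 - l2) + l2)%C by ring. rewrite H. ring. }
  apply Cmod_eq_0. apply Rle_antisym; [|apply Cmod_ge_0].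
  apply Rnot_lt_le. intros Hp.
  destruct (H1 (Cmod (l1 - l2) / 2)) as [N1 HN1]; [lra|].
  destruct (H2 (Cmod (l1 - l2) / 2)) as [N2 HN2]; [lra|].
  specialize (HN1 (max N1 N2) ltac:(lia)). specialize (HN2 (max N1 N2) ltac:(lia)).
  set (s := sum_n f (max N1 N2)) in *.
  assert (Cmod (l1 - l2) <= Cmod (s - l2) + Cmod (s - l1)).
  { replace (l1 - l2)%C with ((s - l2) + - (s - l1))%C by ring.
    eapply Rle_trans; [apply Cmod_triangle|]. rewrite Cmod_opp; lra. }
  lra.
Qed.

Lemma series_to_ext f g l : (forall n, f n = g n) -> series_to f l -> series_to g l.
Proof.
  rewrite !series_to_sum_n. intros Hfg H eps Heps.
  destruct (H eps Heps) as [N HN]. exists N. intros n Hn.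
  rewrite (sum_n_ext g f) by auto. auto.
Qed.

Lemma series_to_plus f g A B : series_to f A -> series_to g B ->
  series_to (fun n => f n + g n)%C (A + B)%C.
Proof.
  rewrite !series_to_sum_n. intros H1 H2 eps He.
  destruct (H1 (eps/2)) as [N1 HN1]; [lra|]. destruct (H2 (eps/2)) as [N2 HN2]; [lra|].
  exists (max N1 N2). intros n Hn. rewrite Csum_n_plus.
  replace (sum_n f n + sum_n g n - (A + B))%C with ((sum_n f n - A) + (sum_n g n - B))%C by ring.
  eapply Rle_lt_trans; [apply Cmod_triangle|].
  specialize (HN1 n ltac:(lia)); specialize (HN2 n ltac:(lia)); lra.
Qed.

Lemma series_to_scal f k A : series_to f A -> series_to (fun n => k * f n)%C (k * A)%C.
Proof.
  rewrite !series_to_sum_n. intros H eps He. pose proof (Cmod_ge_0 k).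
  destruct (H (eps / (Cmod k + 1))) as [N HN]; [apply Rdiv_lt_0_compat; lra|].
  exists N. intros n Hn. rewrite Csum_n_scal.
  replace (k * sum_n f n - k * A)%C with (k * (sum_n f n - A))%C by ring.
  rewrite Cmod_mult. specialize (HN n Hn). pose proof (Cmod_ge_0 (sum_n f n - A)).
  apply Rle_lt_trans with ((Cmod k + 1) * Cmod (sum_n f n - A)); [nra|].
  apply Rmult_lt_compat_l with (r := Cmod k + 1) in HN; [|lra].
  replace ((Cmod k + 1) * (eps / (Cmod k + 1))) with eps in HN by (field; lra). lra.
Qed.

Lemma series_to_minus f g A B : series_to f A -> series_to g B ->
  series_to (fun n => f n - g n)%C (A - B)%C.
Proof.
  intros H1 H2. apply series_to_scal with (k := (-(1))%C) in H2.
  replace (A - B)%C with (A + (-(1)) * B)%C by ring.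
  apply series_to_ext with (fun n => f n + (-(1)) * g n)%C; [intros; ring|].
  apply series_to_plus; auto.
Qed.

Lemma series_to_Cmod_le f A B :
  (forall N, Cmod (sum_n f N) <= B) -> series_to f A -> Cmod A <= B.
Proof.
  rewrite series_to_sum_n. intros Hb H. apply Rnot_lt_le; intros Hlt.
  destruct (H (Cmod A - B)) as [N HN]; [lra|]. specialize (HN N (le_n _)).
  assert (Cmod A <= Cmod (sum_n f N - A) + Cmod (sum_n f N)).
  { replace A with (- (sum_n f N - A) + sum_n f N)%C at 1 by ring.
    eapply Rle_trans; [apply Cmod_triangle|]. rewrite Cmod_opp; lra. }
  specialize (Hb N). lra.
Qed.

Lemma is_series_series_to (f : nat -> C) l :
  @is_series C_AbsRing C_NormedModule f l -> series_to f l.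
Proof.
  rewrite series_to_sum_n. intros H eps He.
  assert (Hp : 0 < eps / sqrt 2) by (apply Rdiv_lt_0_compat; [lra|apply sqrt_lt_R0; lra]).
  destruct (proj1 (filterlim_locally (sum_n f) l) H (mkposreal _ Hp)) as [N HN].
  exists N. intros n Hn. specialize (HN n Hn).
  apply C_NormedModule_mixin_compat2 in HN. simpl in HN.
  replace (sqrt 2 * (eps / sqrt 2)) with eps in HN
    by (field; apply Rgt_not_eq, sqrt_lt_R0; lra).
  exact HN.
Qed.

Lemma series_to_of_majorant (f : nat -> C) (b : nat -> R) :
  (forall n, Cmod (f n) <= b n) -> ex_series b -> exists l, series_to f l.
Proof.
  intros Hb Hs. assert (@ex_series C_AbsRing C_CompleteNormedModule f) as [l Hl]
    by exact (@ex_series_le C_AbsRing C_CompleteNormedModule f b Hb Hs).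
  exists l. apply is_series_series_to. exact Hl.
Qed.

Lemma sum_n_le_Series (b : nat -> R) N :
  (forall n, 0 <= b n) -> ex_series b -> sum_n b N <= Series b.
Proof.
  intros Hpos Hs. rewrite sum_n_Reals. apply sum_incr; [|exact Hpos].
  apply is_series_Reals, Series_correct, Hs.
Qed.

(** Junk when [f] is not summable. *)
Definition csum (f : nat -> C) : C := epsilon (inhabits (RtoC 0)) (fun l => series_to f l).

Lemma csum_spec f l : series_to f l -> csum f = l.
Proof.
  intros H. unfold csum. apply (series_to_unique f); auto.
  apply (epsilon_spec (inhabits (RtoC 0)) (fun l => series_to f l)). exists l; auto.
Qed.

(** * Estimates for powers *)

Lemma Cpow_mult (x y : C) n : Cpow (x * y) n = (Cpow x n * Cpow y n)%C.
Proof. induction n; simpl; [ring|rewrite IHn; ring]. Qed.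

Lemma Cpow_sub_le (x y : C) r n : 0 < r -> Cmod x <= r -> Cmod y <= r ->
  Cmod (Cpow x n - Cpow y n) <= INR n * Cmod (x - y) * r ^ n / r.
Proof.
  intros Hr Hx Hy. induction n.
  - simpl. replace (1 - 1)%C with (RtoC 0) by ring. rewrite Cmod_0. lra.
  - cbn [Cpow].
    replace (x * Cpow x n - y * Cpow y n)%C
      with (x * (Cpow x n - Cpow y n) + (x - y) * Cpow y n)%C by ring.
    eapply Rle_trans; [apply Cmod_triangle|]. rewrite !Cmod_mult, Cmod_pow.
    assert (0 <= Cmod (Cpow x n - Cpow y n)) by apply Cmod_ge_0.
    assert (0 <= Cmod (x - y)) by apply Cmod_ge_0.
    assert (Cmod y ^ n <= r ^ n) by (apply pow_incr; split; [apply Cmod_ge_0|auto]).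
    assert (0 <= r ^ n) by (apply pow_le; lra).
    apply Rle_trans with (r * (INR n * Cmod (x - y) * r ^ n / r) + Cmod (x - y) * r ^ n).
    + apply Rplus_le_compat; [|apply Rmult_le_compat_l; auto].
      apply Rmult_le_compat; auto; apply Cmod_ge_0.
    + rewrite S_INR. simpl. apply Req_le. field. lra.
Qed.

Lemma Cpow_taylor_le (x h : C) r n : 0 < r -> Cmod x <= r -> Cmod (x + h) <= r ->
  Cmod (Cpow (x + h) n - Cpow x n - h * (RtoC (INR n) * Cpow x (n - 1)))
    <= INR n ^ 2 * Cmod h ^ 2 * r ^ n / r ^ 2.
Proof.
  intros Hr Hx Hxh. induction n.
  - simpl. replace (1 - 1 - h * (0 * 1))%C with (RtoC 0) by ring. rewrite Cmod_0. simpl. lra.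
  - assert (E : (Cpow (x + h) (S n) - Cpow x (S n) - h * (RtoC (INR (S n)) * Cpow x (S n - 1)))%C =
      (x * (Cpow (x + h) n - Cpow x n - h * (RtoC (INR n) * Cpow x (n - 1)))
       + h * (Cpow (x + h) n - Cpow x n))%C).
    { destruct n.
      - simpl. ring.
      - replace (S (S n) - 1)%nat with (S n) by lia. replace (S n - 1)%nat with n by lia.
        cbn [Cpow]. rewrite (S_INR (S n)), RtoC_plus. ring. }
    rewrite E. eapply Rle_trans; [apply Cmod_triangle|]. rewrite !Cmod_mult.
    pose proof (Cpow_sub_le (x + h) x r n Hr Hxh Hx) as D.
    replace (x + h - x)%C with h in D by ring.
    assert (0 <= Cmod h) by apply Cmod_ge_0.
    assert (0 <= r ^ n) by (apply pow_le; lra).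
    assert (0 <= INR n) by apply pos_INR.
    apply Rle_trans with (r * (INR n ^ 2 * Cmod h ^ 2 * r ^ n / r ^ 2)
                          + Cmod h * (INR n * Cmod h * r ^ n / r)).
    + apply Rplus_le_compat; [|apply Rmult_le_compat_l; auto].
      apply Rmult_le_compat; auto; apply Cmod_ge_0.
    + assert (0 <= Cmod h ^ 2 * r ^ n / r).
      { apply Rmult_le_pos; [apply Rmult_le_pos; [apply pow2_ge_0|auto]|].
        left; apply Rinv_0_lt_compat; lra. }
      replace (r * (INR n ^ 2 * Cmod h ^ 2 * r ^ n / r ^ 2) + Cmod h * (INR n * Cmod h * r ^ n / r))
        with ((INR n ^ 2 + INR n) * (Cmod h ^ 2 * r ^ n / r)) by (field; lra).
      replace (INR (S n) ^ 2 * Cmod h ^ 2 * r ^ S n / r ^ 2)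
        with (INR (S n) ^ 2 * (Cmod h ^ 2 * r ^ n / r)) by (simpl; field; lra).
      apply Rmult_le_compat_r; auto. rewrite S_INR. nra.
Qed.

Lemma Cpow_one_plus_sub_le (eta : C) n :
  Cmod (Cpow (1 + eta) n - 1) <= (1 + Cmod eta) ^ n - 1.
Proof.
  induction n.
  - simpl. replace (1 - 1)%C with (RtoC 0) by ring. rewrite Cmod_0. lra.
  - cbn [Cpow pow].
    replace ((1 + eta) * Cpow (1 + eta) n - 1)%C
      with ((1 + eta) * (Cpow (1 + eta) n - 1) + eta)%C by ring.
    eapply Rle_trans; [apply Cmod_triangle|]. rewrite Cmod_mult.
    assert (Cmod (1 + eta) <= 1 + Cmod eta)
      by (eapply Rle_trans; [apply Cmod_triangle|rewrite Cmod_1; lra]).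
    pose proof (Cmod_ge_0 (Cpow (1 + eta) n - 1)). pose proof (Cmod_ge_0 (1 + eta)).
    assert (Cmod (1 + eta) * Cmod (Cpow (1 + eta) n - 1) <= (1 + Cmod eta) * ((1 + Cmod eta) ^ n - 1))
      by (apply Rmult_le_compat; auto).
    lra.
Qed.

(** * Power series with a summable majorant *)

Fixpoint argmax_upto (phi : nat -> R) (k : nat) : nat :=
  match k with
  | O => O
  | S k' => if Rle_dec (phi (S k')) (phi (argmax_upto phi k')) then argmax_upto phi k' else S k'
  end.

Lemma argmax_upto_le phi k : (argmax_upto phi k <= k)%nat.
Proof. induction k; simpl; auto. destruct Rle_dec; lia. Qed.

Lemma le_argmax_upto phi k m : (m <= k)%nat -> phi m <= phi (argmax_upto phi k).
Proof.
  induction k; intros Hm.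
  - replace m with O by lia. simpl. lra.
  - simpl. destruct (Nat.eq_dec m (S k)) as [->|Hne].
    + destruct Rle_dec; lra.
    + specialize (IHk ltac:(lia)). destruct Rle_dec; lra.
Qed.

Definition majorant (al : nat -> C) (r : R) (n : nat) : R := (INR n + 1) ^ 2 * Cmod (al n) * r ^ n.
Definition pser (al : nat -> C) (x : C) : C := csum (fun n => al n * Cpow x n)%C.
Definition dpser_term (al : nat -> C) (x : C) (n : nat) : C :=
  (RtoC (INR n) * al n * Cpow x (n - 1))%C.
Definition dpser (al : nat -> C) (x : C) : C := csum (dpser_term al x).

Lemma majorant_nonneg al r n : 0 <= r -> 0 <= majorant al r n.
Proof.
  intros. unfold majorant.
  apply Rmult_le_pos; [apply Rmult_le_pos; [apply pow2_ge_0|apply Cmod_ge_0]|apply pow_le; auto].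
Qed.

Section MajorizedPowerSeries.
Variables (al : nat -> C) (r : R).
Hypothesis r_pos : 0 < r.
Hypothesis majorant_summable : ex_series (majorant al r).

Let M := Series (majorant al r).

Lemma pser_term_le x n : Cmod x <= r -> Cmod (al n * Cpow x n) <= majorant al r n.
Proof.
  intros Hx. rewrite Cmod_mult, Cmod_pow. unfold majorant.
  assert (Cmod x ^ n <= r ^ n) by (apply pow_incr; split; [apply Cmod_ge_0|auto]).
  assert (1 <= (INR n + 1) ^ 2) by (pose proof (pos_INR n); nra).
  pose proof (Cmod_ge_0 (al n)). assert (0 <= Cmod x ^ n) by (apply pow_le, Cmod_ge_0).
  assert (0 <= r ^ n) by (apply pow_le; lra).
  rewrite Rmult_assoc. apply Rle_trans with (1 * (Cmod (al n) * r ^ n)); [nra|].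
  apply Rmult_le_compat_r; auto. apply Rmult_le_pos; auto.
Qed.

Lemma pser_spec x : Cmod x <= r -> series_to (fun n => al n * Cpow x n)%C (pser al x).
Proof.
  intros Hx. destruct (series_to_of_majorant (fun n => al n * Cpow x n)%C (majorant al r))
    as [l Hl]; auto using pser_term_le.
  unfold pser. rewrite (csum_spec _ l); auto.
Qed.

Lemma dpser_term_le x n : Cmod x <= r -> Cmod (dpser_term al x n) <= majorant al r n / r.
Proof.
  intros Hx. unfold dpser_term, majorant.
  rewrite !Cmod_mult, Cmod_pow, Cmod_R, Rabs_pos_eq by apply pos_INR.
  pose proof (Cmod_ge_0 (al n)). pose proof (pos_INR n).
  destruct n as [|n].
  - simpl. rewrite !Rmult_0_l. apply Rmult_le_pos; [nra|left; apply Rinv_0_lt_compat; auto].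
  - replace (S n - 1)%nat with n by lia.
    assert (Cmod x ^ n <= r ^ n) by (apply pow_incr; split; [apply Cmod_ge_0|auto]).
    assert (0 <= Cmod x ^ n) by (apply pow_le, Cmod_ge_0).
    assert (0 <= r ^ n) by (apply pow_le; lra).
    replace ((INR (S n) + 1) ^ 2 * Cmod (al (S n)) * r ^ S n / r)
      with ((INR (S n) + 1) ^ 2 * Cmod (al (S n)) * r ^ n) by (simpl; field; lra).
    assert (INR (S n) <= (INR (S n) + 1) ^ 2) by nra.
    apply Rle_trans with (INR (S n) * Cmod (al (S n)) * r ^ n).
    + apply Rmult_le_compat_l; auto. apply Rmult_le_pos; auto.
    + apply Rmult_le_compat_r; auto. apply Rmult_le_compat_r; auto.
Qed.

Lemma dpser_spec x : Cmod x <= r -> series_to (dpser_term al x) (dpser al x).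
Proof.
  intros Hx. destruct (series_to_of_majorant (dpser_term al x) (fun n => majorant al r n * / r))
    as [l Hl]; auto using dpser_term_le.
  - apply ex_series_scal_r; auto.
  - unfold dpser. rewrite (csum_spec _ l); auto.
Qed.

Lemma majorant_Series_nonneg : 0 <= M.
Proof.
  apply Rle_trans with (sum_n (majorant al r) 0).
  - rewrite sum_O. apply majorant_nonneg; lra.
  - apply sum_n_le_Series; auto. intros; apply majorant_nonneg; lra.
Qed.

Lemma pser_taylor_le x h : Cmod x <= r -> Cmod (x + h) <= r ->
  Cmod (pser al (x + h) - pser al x - h * dpser al x) <= Cmod h ^ 2 * (M / r ^ 2).
Proof.
  intros Hx Hxh.
  pose proof (series_to_minus _ _ _ _ (series_to_minus _ _ _ _ (pser_spec _ Hxh) (pser_spec _ Hx))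
                (series_to_scal _ h _ (dpser_spec _ Hx))) as H.
  refine (series_to_Cmod_le _ _ _ _ H). intros N.
  assert (Hr2 : 0 < r ^ 2) by (apply pow_lt; lra).
  assert (0 <= Cmod h ^ 2 / r ^ 2)
    by (apply Rmult_le_pos; [apply pow2_ge_0|left; apply Rinv_0_lt_compat; auto]).
  eapply Rle_trans; [apply Cmod_sum_n_le with (b := fun n => Cmod h ^ 2 / r ^ 2 * majorant al r n)|].
  - intros n _. unfold dpser_term, majorant.
    replace (al n * Cpow (x + h) n - al n * Cpow x n - h * (RtoC (INR n) * al n * Cpow x (n - 1)))%C
      with (al n * (Cpow (x + h) n - Cpow x n - h * (RtoC (INR n) * Cpow x (n - 1))))%C by ring.
    rewrite Cmod_mult. pose proof (Cpow_taylor_le x h r n r_pos Hx Hxh).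
    pose proof (Cmod_ge_0 (al n)). pose proof (pos_INR n).
    assert (0 <= r ^ n) by (apply pow_le; lra). assert (0 <= Cmod h ^ 2) by apply pow2_ge_0.
    apply Rle_trans with (Cmod (al n) * ((INR n + 1) ^ 2 * Cmod h ^ 2 * r ^ n / r ^ 2)).
    + apply Rmult_le_compat_l; auto. eapply Rle_trans; [eassumption|].
      unfold Rdiv. apply Rmult_le_compat_r; [left; apply Rinv_0_lt_compat; auto|].
      apply Rmult_le_compat_r; auto. apply Rmult_le_compat_r; auto. nra.
    + apply Req_le. field. lra.
  - rewrite (@sum_n_mult_l R_Ring).
    replace (Cmod h ^ 2 * (M / r ^ 2)) with (Cmod h ^ 2 / r ^ 2 * M) by (field; lra).
    apply Rmult_le_compat_l; auto. apply sum_n_le_Series; auto.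
    intros; apply majorant_nonneg; lra.
Qed.

Lemma pser_sub_chain (x : nat -> C) (h : C) K Gm :
  (forall j, (j <= K)%nat -> Cmod (x j) <= r) ->
  (forall j, x (S j) = (x j + h)%C) ->
  (forall j, (j < K)%nat -> Cmod (dpser al (x j)) <= Gm) ->
  Cmod (pser al (x K) - pser al (x 0%nat))
    <= INR K * (Cmod h * Gm + Cmod h ^ 2 * (M / r ^ 2)).
Proof.
  intros Hx Hstep HG. induction K as [|K IH].
  - replace (pser al (x 0%nat) - pser al (x 0%nat))%C with (RtoC 0) by ring.
    rewrite Cmod_0. simpl. lra.
  - rewrite Hstep.
    specialize (IH (fun j Hj => Hx j ltac:(lia)) (fun j Hj => HG j ltac:(lia))).
    replace (pser al (x K + h) - pser al (x 0%nat))%C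
      with ((pser al (x K + h) - pser al (x K) - h * dpser al (x K))
            + h * dpser al (x K) + (pser al (x K) - pser al (x 0%nat)))%C by ring.
    eapply Rle_trans; [apply Cmod_triangle|].
    eapply Rle_trans; [apply Rplus_le_compat_r; apply Cmod_triangle|].
    pose proof (pser_taylor_le (x K) h (Hx K ltac:(lia)) ltac:(rewrite <- Hstep; apply Hx; lia)).
    rewrite Cmod_mult.
    assert (Cmod h * Cmod (dpser al (x K)) <= Cmod h * Gm)
      by (apply Rmult_le_compat_l; [apply Cmod_ge_0|apply HG; lia]).
    rewrite S_INR. lra.
Qed.

(** A discrete mean value inequality: subdivide the segment into [K] steps so fine that the
    quadratic Taylor remainders add up to at most [|d|]. *)
Lemma pser_sub_mean_value (u0 d : C) :
  (forall t, 0 <= t <= 1 -> Cmod (u0 + RtoC t * d) <= r) ->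
  exists t, 0 <= t <= 1 /\
    Cmod (pser al (u0 + d) - pser al u0) <= Cmod d * (Cmod (dpser al (u0 + RtoC t * d)) + 1).
Proof.
  intros Hseg. set (C0 := M / r ^ 2).
  assert (HC0 : 0 <= C0).
  { apply Rmult_le_pos; [apply majorant_Series_nonneg|].
    left; apply Rinv_0_lt_compat, pow_lt; lra. }
  destruct (INR_archimed 1 (Cmod d * C0)) as [k0 Hk0]; [lra|].
  set (K := S k0). assert (HK : 0 < INR K) by (unfold K; rewrite S_INR; pose proof (pos_INR k0); lra).
  assert (HK2 : Cmod d * C0 <= INR K) by (unfold K; rewrite S_INR; lra).
  assert (Hfrac : forall j, (j <= K)%nat -> 0 <= INR j / INR K <= 1).
  { intros j Hj. split; [apply Rmult_le_pos; [apply pos_INR|left; apply Rinv_0_lt_compat; auto]|].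
    apply Rmult_le_reg_r with (INR K); auto. unfold Rdiv.
    rewrite Rmult_assoc, Rinv_l, Rmult_1_r, Rmult_1_l by lra. apply le_INR; auto. }
  set (x := fun j : nat => (u0 + RtoC (INR j / INR K) * d)%C).
  set (h := (RtoC (1 / INR K) * d)%C).
  set (js := argmax_upto (fun j => Cmod (dpser al (x j))) k0).
  assert (Hjs : (js <= k0)%nat) by apply argmax_upto_le.
  assert (Hh : Cmod h = Cmod d / INR K).
  { unfold h. rewrite Cmod_mult, Cmod_R, Rabs_pos_eq; [field; lra|]. left; apply Rdiv_lt_0_compat; lra. }
  set (Gm := Cmod (dpser al (x js))).
  assert (Hchain : Cmod (pser al (x K) - pser al (x 0%nat)) <= INR K * (Cmod h * Gm + Cmod h ^ 2 * C0)).
  { apply pser_sub_chain.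
    - intros j Hj. apply Hseg, Hfrac, Hj.
    - intros j. unfold x, h. rewrite S_INR, <- (Cplus_assoc u0). f_equal.
      rewrite <- Cmult_plus_distr_r, <- RtoC_plus. f_equal. f_equal. field. lra.
    - intros j Hj. apply (le_argmax_upto (fun j => Cmod (dpser al (x j)))). unfold K in Hj. lia. }
  exists (INR js / INR K). split; [apply Hfrac; unfold K; lia|].
  replace (x K) with (u0 + d)%C in Hchain by (unfold x; unfold Rdiv; rewrite Rinv_r by lra; ring).
  replace (x 0%nat) with u0 in Hchain by (unfold x; simpl; rewrite Rdiv_0_l; ring).
  eapply Rle_trans; [exact Hchain|]. rewrite Hh. fold (x js). fold Gm.
  assert (0 <= Gm) by apply Cmod_ge_0. pose proof (Cmod_ge_0 d).
  replace (INR K * (Cmod d / INR K * Gm + (Cmod d / INR K) ^ 2 * C0))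
    with (Cmod d * Gm + Cmod d * (Cmod d * C0 / INR K)) by (field; lra).
  assert (Cmod d * C0 / INR K <= 1).
  { apply Rmult_le_reg_r with (INR K); auto. unfold Rdiv. rewrite Rmult_assoc, Rinv_l by lra. lra. }
  nra.
Qed.

End MajorizedPowerSeries.

(** * Summation by parts *)

Lemma bernoulli_inv x K : 0 <= x -> (1 + x) ^ K * (1 - INR K * x) <= 1.
Proof.
  intros Hx. induction K.
  - simpl. lra.
  - rewrite S_INR. cbn [pow]. assert (0 <= (1 + x) ^ K) by (apply pow_le; lra).
    destruct (Rle_dec 0 (1 - (INR K + 1) * x)) as [Hp|Hn].
    + apply Rle_trans with ((1 + x) ^ K * (1 - INR K * x)); auto.
      replace ((1 + x) * (1 + x) ^ K * (1 - (INR K + 1) * x))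
        with ((1 + x) ^ K * ((1 + x) * (1 - (INR K + 1) * x))) by ring.
      apply Rmult_le_compat_l; auto. pose proof (pos_INR K). nra.
    + assert (0 <= (1 + x) * (1 + x) ^ K) by (apply Rmult_le_pos; lra). nra.
Qed.

Lemma pow_one_plus_le_two x K : 0 <= x -> INR K * x <= /2 -> (1 + x) ^ K <= 2.
Proof.
  intros Hx HK. pose proof (bernoulli_inv x K Hx).
  assert (0 <= (1 + x) ^ K) by (apply pow_le; lra).
  assert ((1 + x) ^ K * (INR K * x) <= (1 + x) ^ K * /2) by (apply Rmult_le_compat_l; lra).
  nra.
Qed.

Fixpoint abel_correction (c T : nat -> C) (k : nat) : C :=
  match k with
  | O => RtoC 0
  | S k' => (abel_correction c T k' + (c (S k') - c k') * T k')%C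
  end.

Lemma sum_n_by_parts (t c : nat -> C) K : c O = RtoC 0 ->
  sum_n (fun n => t n * c n)%C K = (c K * sum_n t K - abel_correction c (sum_n t) K)%C :> C.
Proof.
  intros H0. induction K.
  - rewrite !sum_O. simpl. rewrite H0. ring.
  - rewrite !Csum_n_S, IHK. simpl. ring.
Qed.

Lemma abel_correction_le (c T : nat -> C) (x Bd : R) K :
  0 <= x -> (forall m, (m <= K)%nat -> Cmod (T m) <= Bd) ->
  (forall k, Cmod (c (S k) - c k) <= x * (1 + x) ^ k) ->
  Cmod (abel_correction c T K) <= INR K * x * (1 + x) ^ K * Bd.
Proof.
  intros Hx HT Hc. assert (HBd : 0 <= Bd) by (eapply Rle_trans; [apply Cmod_ge_0|apply (HT O); lia]).
  induction K as [|k IH].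
  - simpl. rewrite Cmod_0. lra.
  - cbn [abel_correction]. eapply Rle_trans; [apply Cmod_triangle|].
    specialize (IH (fun m Hm => HT m ltac:(lia))). rewrite Cmod_mult.
    assert (HTk : Cmod (T k) <= Bd) by (apply HT; lia).
    assert (0 <= (1 + x) ^ k) by (apply pow_le; lra).
    assert ((1 + x) ^ k <= (1 + x) ^ S k) by (cbn [pow]; nra).
    assert (Cmod (c (S k) - c k) * Cmod (T k) <= x * (1 + x) ^ k * Bd)
      by (apply Rmult_le_compat; auto; apply Cmod_ge_0).
    rewrite S_INR. pose proof (pos_INR k).
    assert (INR k * x * (1 + x) ^ k * Bd <= INR k * x * (1 + x) ^ S k * Bd).
    { apply Rmult_le_compat_r; auto. apply Rmult_le_compat_l; auto. apply Rmult_le_pos; auto. }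
    assert (x * (1 + x) ^ k * Bd <= x * (1 + x) ^ S k * Bd).
    { apply Rmult_le_compat_r; auto. apply Rmult_le_compat_l; auto. }
    nra.
Qed.

Lemma sum_n_mul_pow_one_plus_sub_le (t : nat -> C) (eta : C) K Bd :
  (forall m, (m <= K)%nat -> Cmod (sum_n t m) <= Bd) -> INR K * Cmod eta <= /2 ->
  Cmod (sum_n (fun n => t n * (Cpow (1 + eta) n - 1))%C K) <= 4 * Bd * INR K * Cmod eta.
Proof.
  intros HT HK. set (x := Cmod eta) in *. assert (Hx : 0 <= x) by apply Cmod_ge_0.
  assert (HBd : 0 <= Bd) by (eapply Rle_trans; [apply Cmod_ge_0|apply (HT O); lia]).
  set (c := fun n => (Cpow (1 + eta) n - 1)%C).
  change (fun n => t n * (Cpow (1 + eta) n - 1))%C with (fun n => t n * c n)%C.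
  rewrite (sum_n_by_parts t c K) by (unfold c; simpl; ring).
  assert (HpK : (1 + x) ^ K <= 2) by (apply pow_one_plus_le_two; auto).
  assert (HcK : Cmod (c K) <= 2 * INR K * x).
  { unfold c. eapply Rle_trans; [apply Cpow_one_plus_sub_le|]. fold x.
    pose proof (bernoulli_inv x K Hx).
    assert (0 <= INR K * x) by (apply Rmult_le_pos; auto; apply pos_INR).
    assert ((1 + x) ^ K * (INR K * x) <= 2 * (INR K * x)) by (apply Rmult_le_compat_r; lra).
    nra. }
  assert (Hc : forall k, Cmod (c (S k) - c k) <= x * (1 + x) ^ k).
  { intros k. unfold c.
    replace (Cpow (1 + eta) (S k) - 1 - (Cpow (1 + eta) k - 1))%C
      with (eta * Cpow (1 + eta) k)%C by (simpl; ring).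
    rewrite Cmod_mult, Cmod_pow. apply Rmult_le_compat_l; auto. apply pow_incr.
    split; [apply Cmod_ge_0|]. eapply Rle_trans; [apply Cmod_triangle|]. rewrite Cmod_1. fold x. lra. }
  pose proof (abel_correction_le c (sum_n t) x Bd K Hx HT Hc) as HQ.
  eapply Rle_trans; [apply Cmod_triangle|]. rewrite Cmod_opp, Cmod_mult.
  specialize (HT K (le_n _)). pose proof (pos_INR K).
  assert (Cmod (c K) * Cmod (sum_n t K) <= 2 * INR K * x * Bd)
    by (apply Rmult_le_compat; auto; apply Cmod_ge_0).
  assert (INR K * x * (1 + x) ^ K * Bd <= INR K * x * 2 * Bd).
  { apply Rmult_le_compat_r; auto. apply Rmult_le_compat_l; auto. apply Rmult_le_pos; auto. }
  nra.
Qed.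

(** * The radius of convergence *)

Lemma ex_series_sq_geom th : 0 < th < 1 -> ex_series (fun n => (INR n + 1) ^ 2 * th ^ n).
Proof.
  intros Hth.
  assert (Hlim0 : is_lim_seq (fun n => / INR (S n)) 0).
  { replace (Finite 0) with (Rbar_inv p_infty) by reflexivity. apply is_lim_seq_inv; [|discriminate].
    apply (is_lim_seq_incr_1 INR p_infty). apply is_lim_seq_INR. }
  assert (Hlim : is_lim_seq (fun n => th * ((1 + / INR (S n)) * (1 + / INR (S n)))) th).
  { replace (Finite th) with (Rbar_mult th ((1 + 0) * (1 + 0))) by (simpl; f_equal; ring).
    apply is_lim_seq_scal_l, is_lim_seq_mult';
      apply is_lim_seq_plus'; auto using is_lim_seq_const. }
  apply ex_series_ext with (fun n => Rabs ((INR n + 1) ^ 2 * th ^ n)).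
  { intros n. apply Rabs_pos_eq. apply Rmult_le_pos; [apply pow2_ge_0|apply pow_le; lra]. }
  apply ex_series_DAlembert with th; [lra| |].
  - intros n. apply Rgt_not_eq. pose proof (pos_INR n).
    apply Rmult_lt_0_compat; [nra|apply pow_lt; lra].
  - apply is_lim_seq_ext with (2 := Hlim). intros n.
    pose proof (pos_INR n). assert (0 < th ^ n) by (apply pow_lt; lra).
    rewrite Rabs_pos_eq; [rewrite !S_INR; simpl; field; repeat split; lra|].
    rewrite !S_INR. simpl. apply Rmult_le_pos; [apply Rmult_le_pos; nra|].
    left. apply Rinv_0_lt_compat. apply Rmult_lt_0_compat; nra.
Qed.

Lemma majorant_summable_of_pow_bound (al : nat -> C) r2 r3 : 0 < r2 < r3 ->
  (exists n0, forall n, (n0 <= n)%nat -> Cmod (al n) * r3 ^ n <= 1) ->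
  ex_series (majorant al r2).
Proof.
  intros Hr [n0 Hn0]. set (th := r2 / r3).
  assert (Hth : 0 < th < 1).
  { unfold th. split; [apply Rdiv_lt_0_compat; lra|].
    apply Rmult_lt_reg_r with r3; [lra|]. unfold Rdiv. rewrite Rmult_assoc, Rinv_l by lra. lra. }
  apply (ex_series_incr_n _ n0).
  apply (@ex_series_le R_AbsRing R_CompleteNormedModule)
    with (b := fun k => (INR (n0 + k) + 1) ^ 2 * th ^ (n0 + k)).
  - intros k. change (norm (majorant al r2 (n0 + k))) with (Rabs (majorant al r2 (n0 + k))).
    rewrite Rabs_pos_eq by (apply majorant_nonneg; lra). unfold majorant.
    set (n := (n0 + k)%nat). specialize (Hn0 n ltac:(unfold n; lia)).
    rewrite Rmult_assoc. apply Rmult_le_compat_l; [apply pow2_ge_0|].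
    replace (r2 ^ n) with (r3 ^ n * th ^ n) by (unfold th; rewrite <- Rpow_mult_distr; f_equal; field; lra).
    rewrite <- Rmult_assoc. rewrite <- (Rmult_1_l (th ^ n)) at 2.
    apply Rmult_le_compat_r; auto. apply pow_le; lra.
  - apply (ex_series_incr_n (fun n => (INR n + 1) ^ 2 * th ^ n) n0). apply ex_series_sq_geom; auto.
Qed.

Lemma pow_add_le_pow_plus a b n : 0 <= a -> 0 <= b -> (1 <= n)%nat -> a ^ n + b ^ n <= (a + b) ^ n.
Proof.
  intros Ha Hb Hn. induction n; [lia|]. destruct n.
  - simpl. lra.
  - specialize (IHn ltac:(lia)). cbn [pow] in *.
    assert (0 <= a ^ n) by (apply pow_le; lra). assert (0 <= b ^ n) by (apply pow_le; lra).
    assert (0 <= a * a ^ n) by (apply Rmult_le_pos; lra).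
    assert (0 <= b * b ^ n) by (apply Rmult_le_pos; lra).
    nra.
Qed.

Lemma le_pow_of_nroot_lt n x lam : (1 <= n)%nat -> 0 <= x -> 0 < lam -> nroot n x < lam -> x <= lam ^ n.
Proof.
  intros Hn Hx Hl H. unfold nroot in H. destruct (Rle_dec x 0).
  - replace x with 0 by lra. apply pow_le; lra.
  - replace x with (Rpower x (/ INR n) ^ n) at 1.
    + apply pow_incr. split; [left; apply exp_pos|lra].
    + rewrite <- Rpower_pow by apply exp_pos. rewrite Rpower_mult, Rinv_l, Rpower_1; [lra|lra|].
      apply not_0_INR. lia.
Qed.

Lemma LimSup_lt_of_lt_rbar_inv (u : nat -> R) Rd : 0 < Rd ->
  Rbar_lt (Finite Rd) (rbar_inv (LimSup_seq u)) ->
  exists l, LimSup_seq u = Finite l /\ 0 <= l /\ l * Rd < 1.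
Proof.
  intros HRd H. destruct (LimSup_seq u) as [l| |]; simpl in H; try lra.
  exists l. split; auto. destruct (Req_EM_T l 0) as [->|Hne]; simpl in H; [lra|].
  destruct (Rlt_le_dec l 0) as [Hneg|Hpos].
  - assert (/ l < 0) by (apply Rinv_lt_0_compat; auto). lra.
  - split; auto. apply Rmult_lt_compat_l with (r := l) in H; [|lra].
    rewrite Rinv_r in H by auto. lra.
Qed.

Lemma root_bound_of_LimSup (al : nat -> C) l eta :
  LimSup_seq (fun n => nroot n (Cmod (al n))) = Finite l -> 0 <= l -> 0 < eta ->
  exists N, forall n, (N <= n)%nat -> Cmod (al n) <= (l + eta) ^ n.
Proof.
  intros HL Hl Heta.
  pose proof (proj2_sig (ex_LimSup_seq (fun n => nroot n (Cmod (al n))))) as Hsup.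
  fold (LimSup_seq (fun n => nroot n (Cmod (al n)))) in Hsup. rewrite HL in Hsup.
  destruct (proj2 (Hsup (mkposreal eta Heta))) as [N HN]. simpl in HN.
  exists (max N 1). intros n Hn.
  apply le_pow_of_nroot_lt; [lia|apply Cmod_ge_0|lra|]. apply HN. lia.
Qed.

(** Perturbing the coefficients by [ka^n], with [ka] small, keeps the radius above [V + 3s/4]. *)
Lemma pow_bound_of_lt_radius (a2 a1 : nat -> C) V s ka :
  0 <= V -> 0 < s -> 0 <= ka ->
  Rbar_lt (Finite (V + s)) (rbar_inv (LimSup_seq (fun n => nroot n (Cmod (a2 n))))) ->
  (forall n, (1 <= n)%nat -> Cmod (a1 n) <= Cmod (a2 n) + ka ^ n) ->
  ka * (V + s) * (V + s) < s / 4 ->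
  exists n0, forall n, (n0 <= n)%nat -> Cmod (a1 n) * (V + 3 * s / 4) ^ n <= 1.
Proof.
  intros HV Hs Hka Hrad Hcmp Hka2.
  destruct (LimSup_lt_of_lt_rbar_inv _ (V + s) ltac:(lra) Hrad) as [l [HL [Hl0 Hl1]]].
  set (r3 := V + 3 * s / 4). assert (Hr3 : 0 < r3) by (unfold r3; lra).
  assert (Hm1 : r3 * l <= 1 - s / (4 * (V + s))).
  { replace (r3 * l) with ((1 - s / (4 * (V + s))) * (l * (V + s))) by (unfold r3; field; lra).
    assert (s / (4 * (V + s)) <= 1).
    { apply Rmult_le_reg_r with (4 * (V + s)); [lra|].
      unfold Rdiv. rewrite Rmult_assoc, Rinv_l by lra. lra. }
    assert (0 <= l * (V + s)) by nra. nra. }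
  assert (Hm2 : r3 * ka < s / (4 * (V + s))).
  { apply Rle_lt_trans with ((V + s) * ka); [apply Rmult_le_compat_r; auto; unfold r3; lra|].
    apply Rmult_lt_reg_r with (V + s); [lra|].
    replace (s / (4 * (V + s)) * (V + s)) with (s / 4) by (field; lra). nra. }
  set (eta := (1 - r3 * l - r3 * ka) / (2 * r3)).
  assert (Heta : 0 < eta) by (unfold eta; apply Rdiv_lt_0_compat; lra).
  destruct (root_bound_of_LimSup a2 l eta HL Hl0 Heta) as [N HN].
  exists (max N 1). intros n Hn.
  assert (Cmod (a1 n) <= (l + eta + ka) ^ n).
  { eapply Rle_trans; [apply Hcmp; lia|].
    eapply Rle_trans; [apply Rplus_le_compat_r, HN; lia|].
    apply pow_add_le_pow_plus; [lra|lra|lia]. }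
  assert (Hprod : r3 * (l + eta + ka) <= 1) by (unfold eta; field_simplify; lra).
  apply Rle_trans with ((l + eta + ka) ^ n * r3 ^ n).
  - apply Rmult_le_compat_r; auto. apply pow_le; lra.
  - rewrite <- Rpow_mult_distr. apply pow_le_one. split; [apply Rmult_le_pos; lra|lra].
Qed.

(** * Moderate and negligible nets *)

Section Nets.
Variable rho : R -> R.
Hypothesis rho_gauge : is_gauge rho.

Let rho_small : ev0 (fun e => 0 < rho e <= /4) := gauge_le_quarter rho rho_gauge.

Lemma rho_pow_pos q e : 0 < rho e <= /4 -> 0 < rho e ^ q.
Proof. intros; apply pow_lt; lra. Qed.

Lemma rho_pow_S_le q e : 0 < rho e <= /4 -> rho e ^ S q <= / 4 * rho e ^ q.
Proof. intros H. cbn [pow]. pose proof (rho_pow_pos q e H). nra. Qed.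

Lemma moderateR_iff_mul x :
  moderateR rho x <-> exists N, ev0 (fun e => Rabs (x e) * rho e ^ N <= 1).
Proof.
  split; intros [N HN]; exists N; apply ev0_impl with (1 := ev0_and _ _ HN rho_small);
    intros e _ [H1 H2]; pose proof (rho_pow_pos N e H2).
  - apply Rmult_le_reg_r with (/ rho e ^ N); [apply Rinv_0_lt_compat; auto|].
    rewrite Rmult_assoc, Rinv_r, Rmult_1_l, Rmult_1_r by lra. auto.
  - apply Rmult_le_reg_r with (rho e ^ N); auto. rewrite Rinv_l by lra. auto.
Qed.

Lemma moderateC_iff_mul x :
  moderateC rho x <-> exists N, ev0 (fun e => Cmod (x e) * rho e ^ N <= 1).
Proof.
  unfold moderateC. rewrite moderateR_iff_mul.
  split; intros [N H]; exists N; apply ev0_impl with (1 := H); intros e _;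
    rewrite Rabs_pos_eq by apply Cmod_ge_0; auto.
Qed.

Lemma negligibleC_iff x : negligibleC rho x <-> forall q, ev0 (fun e => Cmod (x e) <= rho e ^ q).
Proof.
  unfold negligibleC, negligibleR.
  split; intros H q; apply ev0_impl with (1 := H q); intros e _;
    rewrite Rabs_pos_eq by apply Cmod_ge_0; auto.
Qed.

Lemma negligibleC_moderateC x : negligibleC rho x -> moderateC rho x.
Proof.
  rewrite negligibleC_iff, moderateC_iff_mul. intros H. exists 0%nat.
  apply ev0_impl with (1 := H 0%nat). intros e _ H1. simpl in *. lra.
Qed.

Lemma negligibleC_ev_ext (x y : R -> C) :
  ev0 (fun e => x e = y e) -> negligibleC rho x -> negligibleC rho y.
Proof.
  rewrite !negligibleC_iff. intros He H q. apply ev0_impl with (1 := ev0_and _ _ He (H q)).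
  intros e _ [H1 H2]. rewrite <- H1; auto.
Qed.

Lemma negligibleC_ext (x y : R -> C) :
  (forall e, x e = y e) -> negligibleC rho x -> negligibleC rho y.
Proof. intros He. apply negligibleC_ev_ext, ev0_always. auto. Qed.

Lemma negligibleC_le (x y : R -> C) :
  ev0 (fun e => Cmod (x e) <= Cmod (y e)) -> negligibleC rho y -> negligibleC rho x.
Proof.
  rewrite !negligibleC_iff. intros H Hy q. apply ev0_impl with (1 := ev0_and _ _ H (Hy q)).
  intros e _ [H1 H2]. lra.
Qed.

Lemma negligibleC_le2 (x y1 y2 : R -> C) :
  ev0 (fun e => Cmod (x e) <= Cmod (y1 e) + Cmod (y2 e)) ->
  negligibleC rho y1 -> negligibleC rho y2 -> negligibleC rho x.
Proof.
  rewrite !negligibleC_iff. intros H H1 H2 q.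
  apply ev0_impl with (1 := ev0_and _ _ H (ev0_and _ _ (H1 (S q)) (ev0_and _ _ (H2 (S q)) rho_small))).
  intros e _ [A [A1 [A2 A3]]]. pose proof (rho_pow_S_le q e A3). pose proof (rho_pow_pos q e A3). lra.
Qed.

Lemma negligibleC_plus (x y : R -> C) :
  negligibleC rho x -> negligibleC rho y -> negligibleC rho (fun e => x e + y e)%C.
Proof. apply negligibleC_le2, ev0_always. intros; apply Cmod_triangle. Qed.

Lemma negligibleC_opp (x : R -> C) : negligibleC rho x -> negligibleC rho (fun e => - x e)%C.
Proof. apply negligibleC_le, ev0_always. intros. rewrite Cmod_opp. lra. Qed.

Lemma negligibleC_minus (x y : R -> C) :
  negligibleC rho x -> negligibleC rho y -> negligibleC rho (fun e => x e - y e)%C.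
Proof. intros. apply negligibleC_plus; auto. apply negligibleC_opp; auto. Qed.

Lemma negligibleC_mul (x y : R -> C) :
  negligibleC rho x -> moderateC rho y -> negligibleC rho (fun e => x e * y e)%C.
Proof.
  rewrite negligibleC_iff, moderateC_iff_mul, negligibleC_iff. intros Hx [N HN] q.
  apply ev0_impl with (1 := ev0_and _ _ (Hx (q + N)%nat) (ev0_and _ _ HN rho_small)).
  intros e _ [A1 [A2 A3]]. rewrite Cmod_mult. rewrite pow_add in A1.
  pose proof (rho_pow_pos N e A3). pose proof (rho_pow_pos q e A3).
  pose proof (Cmod_ge_0 (x e)). pose proof (Cmod_ge_0 (y e)).
  apply Rle_trans with (rho e ^ q * rho e ^ N * Cmod (y e)); [apply Rmult_le_compat_r; auto|].
  rewrite Rmult_assoc. rewrite <- (Rmult_1_r (rho e ^ q)) at 2. apply Rmult_le_compat_l; lra.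
Qed.

Lemma negligibleC_of_mul_pow_le (x d : R -> C) E :
  ev0 (fun e => Cmod (x e) * rho e ^ E <= 16 * Cmod (d e)) -> negligibleC rho d -> negligibleC rho x.
Proof.
  rewrite !negligibleC_iff. intros H Hd q.
  apply ev0_impl with (1 := ev0_and _ _ H (ev0_and _ _ (Hd (q + E + 2)%nat) rho_small)).
  intros e _ [H1 [H2 H3]]. pose proof (rho_pow_pos E e H3). pose proof (rho_pow_pos q e H3).
  apply Rmult_le_reg_r with (rho e ^ E); auto.
  replace (rho e ^ (q + E + 2)) with (rho e ^ q * rho e ^ E * (rho e * rho e)) in H2
    by (rewrite !pow_add; simpl; ring).
  assert (rho e ^ q * rho e ^ E * (rho e * rho e) <= rho e ^ q * rho e ^ E * /16).
  { apply Rmult_le_compat_l; [apply Rmult_le_pos|]; nra. }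
  nra.
Qed.

Lemma moderateC_ev_ext (x y : R -> C) :
  ev0 (fun e => x e = y e) -> moderateC rho x -> moderateC rho y.
Proof.
  rewrite !moderateC_iff_mul. intros He [N H]. exists N.
  apply ev0_impl with (1 := ev0_and _ _ He H). intros e _ [H1 H2]. rewrite <- H1; auto.
Qed.

Lemma moderateC_ext (x y : R -> C) : (forall e, x e = y e) -> moderateC rho x -> moderateC rho y.
Proof. intros He. apply moderateC_ev_ext, ev0_always. auto. Qed.

Lemma moderateC_plus (x y : R -> C) :
  moderateC rho x -> moderateC rho y -> moderateC rho (fun e => x e + y e)%C.
Proof.
  rewrite !moderateC_iff_mul. intros [N1 H1] [N2 H2]. exists (N1 + N2 + 1)%nat.
  apply ev0_impl with (1 := ev0_and _ _ H1 (ev0_and _ _ H2 rho_small)). intros e _ [A1 [A2 A3]].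
  pose proof (rho_pow_pos N1 e A3). pose proof (rho_pow_pos N2 e A3).
  assert (rho e ^ N1 <= 1) by (apply pow_le_one; lra). assert (rho e ^ N2 <= 1) by (apply pow_le_one; lra).
  pose proof (Cmod_triangle (x e) (y e)). pose proof (Cmod_ge_0 (x e + y e)).
  replace (rho e ^ (N1 + N2 + 1)) with (rho e ^ N1 * rho e ^ N2 * rho e) by (rewrite !pow_add; ring).
  assert (Cmod (x e) * rho e ^ N1 * (rho e ^ N2 * rho e) <= 1 * (rho e ^ N2 * rho e))
    by (apply Rmult_le_compat_r; [apply Rmult_le_pos|]; lra).
  assert (Cmod (y e) * rho e ^ N2 * (rho e ^ N1 * rho e) <= 1 * (rho e ^ N1 * rho e))
    by (apply Rmult_le_compat_r; [apply Rmult_le_pos|]; lra).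
  apply Rle_trans with ((Cmod (x e) + Cmod (y e)) * (rho e ^ N1 * rho e ^ N2 * rho e)); [|nra].
  apply Rmult_le_compat_r; auto. apply Rmult_le_pos; [apply Rmult_le_pos|]; lra.
Qed.

Lemma moderateC_opp (x : R -> C) : moderateC rho x -> moderateC rho (fun e => - x e)%C.
Proof.
  rewrite !moderateC_iff_mul. intros [N H]. exists N.
  apply ev0_impl with (1 := H). intros e _. rewrite Cmod_opp; auto.
Qed.

Lemma moderateC_minus (x y : R -> C) :
  moderateC rho x -> moderateC rho y -> moderateC rho (fun e => x e - y e)%C.
Proof. intros Hx Hy. apply moderateC_plus; auto. apply moderateC_opp; auto. Qed.

Lemma eqC_refl x : eqC rho x x.
Proof.
  apply negligibleC_iff. intros q. apply ev0_impl with (1 := rho_small). intros e _ H.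
  replace (x e - x e)%C with (RtoC 0) by ring. rewrite Cmod_0. left; apply rho_pow_pos; auto.
Qed.

Lemma eqC_sym x y : eqC rho x y -> eqC rho y x.
Proof.
  intros H. apply negligibleC_ext with (fun e => - (x e - y e))%C; [intros; ring|].
  apply negligibleC_opp; auto.
Qed.

Lemma eqC_trans x y w : eqC rho x y -> eqC rho y w -> eqC rho x w.
Proof.
  intros H1 H2. apply negligibleC_ext with (fun e => (x e - y e) + (y e - w e))%C; [intros; ring|].
  apply negligibleC_plus; auto.
Qed.

Lemma eqC_minus x1 x2 y1 y2 : eqC rho x1 y1 -> eqC rho x2 y2 ->
  eqC rho (fun e => x1 e - x2 e)%C (fun e => y1 e - y2 e)%C.
Proof.
  intros H1 H2. apply negligibleC_ext with (fun e => (x1 e - y1 e) - (x2 e - y2 e))%C; [intros; ring|].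
  apply negligibleC_minus; auto.
Qed.

Lemma eqC_moderateC x y : eqC rho x y -> moderateC rho x -> moderateC rho y.
Proof.
  intros H Hx. apply moderateC_ext with (fun e => x e + - (x e - y e))%C; [intros; ring|].
  apply moderateC_plus; auto. apply negligibleC_moderateC, negligibleC_opp; auto.
Qed.

Lemma strong_eq_refl a : strong_eq rho a a.
Proof.
  intros q r. apply ev0_impl with (1 := rho_small). intros e _ H n.
  replace (a n e - a n e)%C with (RtoC 0) by ring. rewrite Cmod_0. left; apply rho_pow_pos; auto.
Qed.

Lemma strong_eq_sym a b : strong_eq rho a b -> strong_eq rho b a.
Proof.
  intros H q r. apply ev0_impl with (1 := H q r). intros e _ H1 n.
  replace (b n e - a n e)%C with (- (a n e - b n e))%C by ring. rewrite Cmod_opp. auto.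
Qed.

Lemma strong_eq_trans a b c : strong_eq rho a b -> strong_eq rho b c -> strong_eq rho a c.
Proof.
  intros H1 H2 q r.
  apply ev0_impl with (1 := ev0_and _ _ (H1 q (S r)) (ev0_and _ _ (H2 q (S r)) rho_small)).
  intros e _ [A1 [A2 A3]] n. specialize (A1 n). specialize (A2 n).
  replace (a n e - c n e)%C with ((a n e - b n e) + (b n e - c n e))%C by ring.
  eapply Rle_trans; [apply Cmod_triangle|]. rewrite Nat.add_succ_r in A1, A2.
  pose proof (rho_pow_S_le (n * q + r) e A3). pose proof (rho_pow_pos (n * q + r) e A3). lra.
Qed.

Lemma weakly_moderate_mul a : weakly_moderate rho a ->
  exists Q R0, ev0 (fun e => forall n, Cmod (a n e) * rho e ^ (n * Q + R0) <= 1).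
Proof.
  intros [Q [R0 H]]. exists Q, R0. apply ev0_impl with (1 := ev0_and _ _ H rho_small).
  intros e _ [A1 A2] n. pose proof (rho_pow_pos (n * Q + R0) e A2).
  apply Rmult_le_reg_r with (/ rho e ^ (n * Q + R0)); [apply Rinv_0_lt_compat; auto|].
  rewrite Rmult_assoc, Rinv_r, Rmult_1_r, Rmult_1_l by lra. auto.
Qed.

Lemma weakly_moderate_strong_eq a b : weakly_moderate rho a -> strong_eq rho a b -> weakly_moderate rho b.
Proof.
  intros [Q [R0 H]] Hab. exists Q, (S R0).
  apply ev0_impl with (1 := ev0_and _ _ H (ev0_and _ _ (Hab 0%nat 0%nat) rho_small)).
  intros e _ [A1 [A2 A3]] n. specialize (A1 n). specialize (A2 n).
  rewrite Nat.mul_0_r, Nat.add_0_r in A2. cbn [pow] in A2.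
  assert (Cmod (b n e) <= Cmod (a n e) + 1).
  { replace (b n e) with (a n e - (a n e - b n e))%C by ring.
    eapply Rle_trans; [apply Cmod_triangle|]. rewrite Cmod_opp. lra. }
  set (k := (n * Q + R0)%nat) in *. replace (n * Q + S R0)%nat with (S k) by (unfold k; lia).
  pose proof (rho_pow_pos k e A3). assert (rho e ^ k <= 1) by (apply pow_le_one; lra).
  assert (1 <= / rho e ^ k) by (rewrite <- Rinv_1; apply Rinv_le_contravar; lra).
  cbn [pow]. rewrite Rinv_mult. assert (4 <= / rho e).
  { replace 4 with (/ / 4) by field. apply Rinv_le_contravar; lra. }
  assert (4 * / rho e ^ k <= / rho e * / rho e ^ k) by (apply Rmult_le_compat_r; lra).
  lra.
Qed.

Lemma hypnat_le (K K' : R -> nat) : hypnat rho K -> (forall e, (K' e <= K e)%nat) -> hypnat rho K'.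
Proof.
  unfold hypnat. rewrite !moderateR_iff_mul. intros [N HN] Hle. exists N.
  apply ev0_impl with (1 := ev0_and _ _ HN rho_small). intros e _ [A1 A2].
  rewrite Rabs_pos_eq in * by apply pos_INR. eapply Rle_trans; [|exact A1].
  apply Rmult_le_compat_r; [left; apply rho_pow_pos; auto|]. apply le_INR, Hle.
Qed.

End Nets.

(** * Hypersums at nearby points *)

Lemma n_mul_pow_half_le n x : 0 <= x <= /2 -> INR n * x ^ n <= 1.
Proof.
  intros Hx. apply Rle_trans with (INR n * (/2) ^ n).
  { apply Rmult_le_compat_l; [apply pos_INR|]. apply pow_incr; lra. }
  induction n; [simpl; lra|]. rewrite S_INR. cbn [pow].
  assert ((/2) ^ n <= 1) by (apply pow_le_one; lra). assert (0 <= (/2) ^ n) by (apply pow_le; lra).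
  nra.
Qed.

(** Near the origin the weak moderateness of the coefficients is beaten by [|w|^n <= rh^((Q+2)n)]. *)
Lemma Cmod_coef_mul_Cpow_sub_le (al : nat -> C) (w w1 : C) (rh : R) (Q R0 : nat) n :
  0 < rh <= /4 -> Cmod (al n) * rh ^ (n * Q + R0) <= 1 ->
  Cmod w1 <= rh ^ (Q + 2) -> Cmod (w - w1) <= rh ^ (Q + 2) ->
  Cmod (al n * (Cpow w n - Cpow w1 n)) * rh ^ (Q + 2 + R0) <= Cmod (w - w1).
Proof.
  intros Hrh Hal Hw1 Hd. set (P := (Q + 2)%nat) in *. set (dl := Cmod (w - w1)) in *.
  set (Mx := 2 * rh ^ P).
  assert (HP : 0 < rh ^ P) by (apply pow_lt; lra).
  assert (HMx : 0 < Mx) by (unfold Mx; lra).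
  assert (Hww : Cmod w <= Mx).
  { replace w with ((w - w1) + w1)%C by ring. eapply Rle_trans; [apply Cmod_triangle|]. fold dl. unfold Mx; lra. }
  pose proof (Cpow_sub_le w w1 Mx n HMx Hww ltac:(unfold Mx; lra)) as HD. fold dl in HD.
  rewrite Cmod_mult. pose proof (Cmod_ge_0 (al n)). pose proof (Cmod_ge_0 (Cpow w n - Cpow w1 n)).
  assert (0 < rh ^ (n * Q)) by (apply pow_lt; lra). assert (0 < rh ^ R0) by (apply pow_lt; lra).
  assert (Hdl : 0 <= dl) by apply Cmod_ge_0.
  rewrite pow_add in Hal |- *.
  set (A := Cmod (al n) * (rh ^ (n * Q) * rh ^ R0)) in Hal.
  assert (0 <= A) by (unfold A; apply Rmult_le_pos; auto; apply Rmult_le_pos; lra).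
  assert (Hx : INR n * (2 * (rh * rh)) ^ n <= 1) by (apply n_mul_pow_half_le; nra).
  assert (0 <= INR n * (2 * (rh * rh)) ^ n) by (apply Rmult_le_pos; [apply pos_INR|apply pow_le; nra]).
  apply Rle_trans with (Cmod (al n) * (INR n * dl * Mx ^ n / Mx) * (rh ^ P * rh ^ R0)).
  { apply Rmult_le_compat_r; [apply Rmult_le_pos; lra|]. apply Rmult_le_compat_l; auto. }
  replace (Cmod (al n) * (INR n * dl * Mx ^ n / Mx) * (rh ^ P * rh ^ R0))
    with (A * (INR n * (2 * (rh * rh)) ^ n) * dl / 2).
  2:{ unfold A, Mx, P. rewrite !Rpow_mult_distr, <- pow_mult.
      replace ((Q + 2) * n)%nat with (n * Q + n + n)%nat by lia. rewrite !pow_add.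
      field. repeat split; apply Rgt_not_eq; try apply pow_lt; lra. }
  assert (A * (INR n * (2 * (rh * rh)) ^ n) <= 1 * 1) by (apply Rmult_le_compat; auto).
  unfold Rdiv. nra.
Qed.

(** Away from the origin, write [w = w1 (1 + eta)] and sum by parts. *)
Lemma Cmod_sum_n_mul_Cpow_sub_far (t : nat -> C) (w w1 : C) K Bd s :
  0 < s -> s <= Cmod w1 ->
  (forall m, (m <= K)%nat -> Cmod (sum_n (fun n => t n * Cpow w1 n)%C m) <= Bd) ->
  INR K * Cmod (w - w1) <= /2 * s ->
  Cmod (sum_n (fun n => t n * (Cpow w n - Cpow w1 n))%C K) * s <= 4 * Bd * INR K * Cmod (w - w1).
Proof.
  intros Hs Hw1 HT HK.
  assert (Hw1' : w1 <> RtoC 0) by (intros E; rewrite E, Cmod_0 in Hw1; lra).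
  set (eta := ((w - w1) / w1)%C).
  assert (Heta : Cmod eta * Cmod w1 = Cmod (w - w1)).
  { rewrite <- Cmod_mult. unfold eta, Cdiv. rewrite <- Cmult_assoc, Cinv_l, Cmult_1_r; auto. }
  pose proof (Cmod_ge_0 eta). pose proof (pos_INR K).
  assert (Hes : Cmod eta * s <= Cmod (w - w1)) by (rewrite <- Heta; apply Rmult_le_compat_l; auto).
  rewrite (Csum_n_ext_loc _ (fun n => (t n * Cpow w1 n) * (Cpow (1 + eta) n - 1))%C).
  2:{ intros n _. replace w with (w1 * (1 + eta))%C by (unfold eta; field; auto).
      rewrite Cpow_mult. ring. }
  assert (Hcond : INR K * Cmod eta <= /2).
  { apply Rmult_le_reg_r with s; auto. nra. }
  pose proof (sum_n_mul_pow_one_plus_sub_le (fun n => t n * Cpow w1 n)%C eta K Bd HT Hcond) as HA.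
  assert (HBd : 0 <= Bd) by (eapply Rle_trans; [apply Cmod_ge_0|apply (HT O); lia]).
  apply Rle_trans with (4 * Bd * INR K * Cmod eta * s); [apply Rmult_le_compat_r; lra|].
  replace (4 * Bd * INR K * Cmod eta * s) with (4 * Bd * INR K * (Cmod eta * s)) by ring.
  apply Rmult_le_compat_l; auto. apply Rmult_le_pos; lra.
Qed.

Lemma Cmod_sum_n_mul_Cpow_sub_near (al : nat -> C) (w w1 : C) K rh Q R0 :
  0 < rh <= /4 -> (forall n, Cmod (al n) * rh ^ (n * Q + R0) <= 1) ->
  Cmod w1 <= rh ^ (Q + 2) -> Cmod (w - w1) <= rh ^ (Q + 2) ->
  Cmod (sum_n (fun n => al n * (Cpow w n - Cpow w1 n))%C K) * rh ^ (Q + 2 + R0)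
    <= INR (S K) * Cmod (w - w1).
Proof.
  intros Hrh Hal Hw1 Hd. assert (Hr : 0 < rh ^ (Q + 2 + R0)) by (apply pow_lt; lra).
  rewrite <- sum_n_const.
  apply Rmult_le_reg_r with (/ rh ^ (Q + 2 + R0)); [apply Rinv_0_lt_compat; lra|].
  rewrite Rmult_assoc, Rinv_r, Rmult_1_r by lra.
  rewrite <- (@sum_n_mult_r R_Ring). apply Cmod_sum_n_le. intros n _.
  apply Rmult_le_reg_r with (rh ^ (Q + 2 + R0)); [lra|].
  rewrite Rmult_assoc, Rinv_l, Rmult_1_r by lra.
  apply Cmod_coef_mul_Cpow_sub_le; auto.
Qed.

Lemma Cmod_sum_n_mul_Cpow_sub_le (al : nat -> C) (w w1 : C) K Bd rh Q R0 NK :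
  0 < rh <= /4 ->
  (forall n, Cmod (al n) * rh ^ (n * Q + R0) <= 1) ->
  (forall m, (m <= K)%nat -> Cmod (sum_n (fun n => al n * Cpow w1 n)%C m) <= Bd) ->
  INR K * rh ^ NK <= 1 ->
  Cmod (w - w1) <= /2 * rh ^ (NK + (Q + 2)) ->
  Cmod (sum_n (fun n => al n * (Cpow w n - Cpow w1 n))%C K) * rh ^ (NK + (Q + 2) + R0)
    <= 4 * (Bd + 1) * Cmod (w - w1).
Proof.
  intros Hrh Hal HT HK Hd. set (P := (Q + 2)%nat) in *. set (dl := Cmod (w - w1)) in *.
  assert (Hdl : 0 <= dl) by apply Cmod_ge_0.
  assert (HBd : 0 <= Bd) by (eapply Rle_trans; [apply Cmod_ge_0|apply (HT O); lia]).
  assert (HrP : 0 < rh ^ P) by (apply pow_lt; lra).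
  assert (HrNK : 0 < rh ^ NK) by (apply pow_lt; lra).
  assert (HrR : 0 < rh ^ R0) by (apply pow_lt; lra).
  assert (rh ^ R0 <= 1) by (apply pow_le_one; lra).
  assert (rh ^ NK <= 1) by (apply pow_le_one; lra).
  pose proof (pos_INR K).
  rewrite pow_add in Hd. rewrite (pow_add _ (NK + P)), (pow_add _ NK).
  set (X := Cmod (sum_n (fun n => al n * (Cpow w n - Cpow w1 n))%C K)). assert (0 <= X) by apply Cmod_ge_0.
  destruct (Rlt_le_dec (Cmod w1) (rh ^ P)) as [Hnear|Hfar].
  - pose proof (Cmod_sum_n_mul_Cpow_sub_near al w w1 K rh Q R0 Hrh Hal ltac:(fold P; lra) ltac:(fold P dl; nra)) as HX.
    fold X P dl in HX. rewrite pow_add, S_INR in HX.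
    replace (X * (rh ^ NK * rh ^ P * rh ^ R0)) with (rh ^ NK * (X * (rh ^ P * rh ^ R0))) by ring.
    apply Rle_trans with (rh ^ NK * ((INR K + 1) * dl)); [apply Rmult_le_compat_l; lra|].
    nra.
  - assert (HKd : INR K * dl <= /2 * rh ^ P).
    { apply Rle_trans with (INR K * (/2 * (rh ^ NK * rh ^ P))); [apply Rmult_le_compat_l; lra|].
      replace (INR K * (/ 2 * (rh ^ NK * rh ^ P))) with (/2 * rh ^ P * (INR K * rh ^ NK)) by ring.
      rewrite <- (Rmult_1_r (/2 * rh ^ P)) at 2. apply Rmult_le_compat_l; lra. }
    pose proof (Cmod_sum_n_mul_Cpow_sub_far al w w1 K Bd (rh ^ P) HrP Hfar HT HKd) as HA. fold X dl in HA.
    replace (X * (rh ^ NK * rh ^ P * rh ^ R0)) with (X * rh ^ P * (rh ^ NK * rh ^ R0)) by ring.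
    apply Rle_trans with (4 * Bd * INR K * dl * (rh ^ NK * rh ^ R0)).
    { apply Rmult_le_compat_r; [nra|exact HA]. }
    replace (4 * Bd * INR K * dl * (rh ^ NK * rh ^ R0)) with (4 * Bd * dl * ((INR K * rh ^ NK) * rh ^ R0)) by ring.
    assert ((INR K * rh ^ NK) * rh ^ R0 <= 1) by (rewrite <- (Rmult_1_r 1); apply Rmult_le_compat; nra).
    assert (0 <= 4 * Bd * dl) by nra. nra.
Qed.

Definition hsums_close (rho : R -> R) (p q : nat -> R -> C) : Prop :=
  forall K, hypnat rho K ->
    negligibleC rho (fun e => hsum p (fun _ => 0%nat) K e - hsum q (fun _ => 0%nat) K e)%C.

Lemma Cmod_sum_n_m_le (f : nat -> C) n m :
  Cmod (sum_n_m f n m) <= Cmod (sum_n f m) + Cmod (sum_n f (n - 1)).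
Proof.
  pose proof (Cmod_ge_0 (sum_n f m)).
  destruct n as [|n]; [change (sum_n_m f 0 m) with (sum_n f m); pose proof (Cmod_ge_0 (sum_n f (0 - 1))); lra|].
  replace (S n - 1)%nat with n by lia. pose proof (Cmod_ge_0 (sum_n f n)).
  destruct (Compare_dec.le_lt_dec (S n) m) as [Hle|Hlt].
  - replace (sum_n_m f (S n) m) with (sum_n f m - sum_n f n)%C
      by (symmetry; exact (sum_n_m_sum_n f n m ltac:(lia))).
    replace (sum_n f m - sum_n f n)%C with (sum_n f m + - sum_n f n)%C by ring.
    eapply Rle_trans; [apply Cmod_triangle|]. rewrite Cmod_opp. lra.
  - rewrite sum_n_m_zero by lia. change (Cmod (RtoC 0) <= Cmod (sum_n f m) + Cmod (sum_n f n)).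
    rewrite Cmod_0. lra.
Qed.

Section HsumsClose.
Variable rho : R -> R.
Hypothesis rho_gauge : is_gauge rho.

Lemma hsums_close_sym p q : hsums_close rho p q -> hsums_close rho q p.
Proof. intros H K HK. apply eqC_sym, H, HK. Qed.

Lemma hsums_close_trans p q s : hsums_close rho p q -> hsums_close rho q s -> hsums_close rho p s.
Proof. intros H1 H2 K HK. eapply eqC_trans; [exact rho_gauge|apply H1|apply H2]; exact HK. Qed.

(** [sum_(n=N)^M] is a difference of two hypersums from [0] (or a junk empty sum when [N > M]). *)
Lemma eq_s_of_hsums_close p q : hsums_close rho p q -> eq_s rho p q.
Proof.
  intros H N M HN HM.
  set (X := fun K : R -> nat =>
    fun e => (hsum p (fun _ => 0%nat) K e - hsum q (fun _ => 0%nat) K e)%C).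
  assert (HN1 : hypnat rho (fun e => (N e - 1)%nat)) by (apply (hypnat_le rho rho_gauge N); auto; intros; lia).
  apply (negligibleC_le2 rho rho_gauge) with (X M) (X (fun e => (N e - 1)%nat)); [|apply H; auto..].
  apply ev0_always. intros e _. unfold X, hsum.
  change (sum_n_m (fun n => p n e) 0 ?k) with (sum_n (fun n => p n e) k).
  change (sum_n_m (fun n => q n e) 0 ?k) with (sum_n (fun n => q n e) k).
  rewrite <- !Csum_n_minus. apply Cmod_sum_n_m_le.
Qed.

Lemma hyperseries_to_close p q l l' :
  hsums_close rho p q -> eqC rho l l' -> hyperseries_to rho q l' -> hyperseries_to rho p l.
Proof.
  intros Hpq Hl H q0. destruct (H (S q0)) as [M [HM HMn]]. exists M. split; auto.
  intros n Hn Hle. destruct (HMn n Hn Hle) as [m Hm]. exists (S m).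
  pose proof (proj1 (negligibleC_iff rho _) (Hpq n Hn) (m + 2)%nat) as HD.
  pose proof (proj1 (negligibleC_iff rho _) Hl (m + 2)%nat) as HL.
  apply ev0_impl with (1 := ev0_and _ _ Hm (ev0_and _ _ HD (ev0_and _ _ HL (gauge_le_quarter rho rho_gauge)))).
  intros e _ [A1 [A2 [A3 A4]]].
  set (Sp := hsum p (fun _ => 0%nat) n e) in *. set (Sq := hsum q (fun _ => 0%nat) n e) in *.
  assert (Cmod (Sp - l e) <= Cmod (Sq - l' e) + Cmod (Sp - Sq) + Cmod (l e - l' e)).
  { replace (Sp - l e)%C with ((Sq - l' e) + (Sp - Sq) + - (l e - l' e))%C by ring.
    eapply Rle_trans; [apply Cmod_triangle|]. rewrite Cmod_opp.
    pose proof (Cmod_triangle (Sq - l' e) (Sp - Sq)). lra. }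
  pose proof (rho_pow_pos rho q0 e A4). pose proof (rho_pow_pos rho m e A4).
  assert (rho e ^ (m + 2) <= rho e ^ m / 16).
  { rewrite pow_add. cbn [pow]. assert (rho e * (rho e * 1) <= /16) by nra. nra. }
  cbn [pow] in A1 |- *. assert (rho e * rho e ^ q0 <= rho e ^ q0) by nra.
  assert (rho e * rho e ^ m <= rho e ^ m / 4) by nra.
  lra.
Qed.

End HsumsClose.

(** * Changing representatives *)

Lemma succ_mul_pow_quarter_le n : (INR n + 1) * (/4) ^ n <= 1.
Proof.
  induction n; [simpl; lra|]. rewrite S_INR. cbn [pow].
  assert ((/4) ^ n <= 1) by (apply pow_le_one; lra). assert (0 <= (/4) ^ n) by (apply pow_le; lra).
  nra.
Qed.

Section Representatives.
Variable rho : R -> R.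
Variables a1 a2 b : nat -> R -> C.
Variables z1 c1 y d v : R -> C.
Hypothesis rho_gauge : is_gauge rho.
Hypothesis a1_weak : weakly_moderate rho a1.
Hypothesis b_a1 : strong_eq rho b a1.
Hypothesis a1_a2 : strong_eq rho a1 a2.
Hypothesis yd_z1c1 : eqC rho (fun e => y e - d e)%C (fun e => z1 e - c1 e)%C.
Hypothesis z1c1_v : eqC rho (fun e => z1 e - c1 e)%C v.
Hypothesis v_moderate : moderateC rho v.
Hypothesis v_in_disc : ltRinf rho (fun e => Cmod (v e)) (rad_net a2).
Hypothesis a1_condA : condA rho a1 z1 c1.
Hypothesis a1_condB : condB rho a1 z1 c1.
Hypothesis a1_condC : condC rho a1 z1 c1.

Let rho_small : ev0 (fun e => 0 < rho e <= /4) := gauge_le_quarter rho rho_gauge.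
Let u e := (y e - d e)%C.
Let u1 e := (z1 e - c1 e)%C.
Let du e := (u e - u1 e)%C.
Let coef e n := a1 n e.

Lemma du_negligible : negligibleC rho du.
Proof. exact yd_z1c1. Qed.

Lemma u1_moderate : moderateC rho u1.
Proof. apply (eqC_moderateC rho rho_gauge v); auto. apply eqC_sym; auto. Qed.

Lemma u_moderate : moderateC rho u.
Proof. apply (eqC_moderateC rho rho_gauge u1); [apply eqC_sym, yd_z1c1|apply u1_moderate]. Qed.

(** Coefficients of strongly equivalent nets differ by [rho^(nq)] with [q] arbitrarily large,
    which beats any moderate geometric growth. *)
Lemma coef_diff_le (x : R -> C) : moderateC rho x -> forall q,
  ev0 (fun e => forall n,
    Cmod (b n e - a1 n e) * ((Cmod (x e) + 1) ^ n * (INR n + 1)) <= rho e ^ q * (/2) ^ n).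
Proof.
  intros Hx q. apply (moderateC_iff_mul rho rho_gauge) in Hx. destruct Hx as [N HN].
  apply ev0_impl with (1 := ev0_and _ _ HN (ev0_and _ _ (b_a1 (N + 2)%nat q) rho_small)).
  intros e _ [A1 [A2 A3]] n. specialize (A2 n).
  set (X := Cmod (x e)). assert (HX : 0 <= X) by apply Cmod_ge_0.
  assert (rho e ^ N <= 1) by (apply pow_le_one; lra).
  assert (HXp : (X + 1) * rho e ^ N <= 2) by (unfold X; lra).
  replace (rho e ^ (n * (N + 2) + q)) with (rho e ^ q * (rho e ^ N * (rho e * rho e)) ^ n) in A2
    by (rewrite pow_add, Rmult_comm, Nat.mul_comm, pow_mult, pow_add; f_equal; f_equal; ring).
  assert (Hq : 0 < rho e ^ q) by (apply rho_pow_pos; auto).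
  pose proof (Cmod_ge_0 (b n e - a1 n e)). pose proof (pos_INR n).
  assert (0 <= (X + 1) ^ n) by (apply pow_le; lra).
  apply Rle_trans with (rho e ^ q * (rho e ^ N * (rho e * rho e)) ^ n * ((X + 1) ^ n * (INR n + 1))).
  { apply Rmult_le_compat_r; auto. apply Rmult_le_pos; lra. }
  rewrite <- !Rmult_assoc, (Rmult_assoc (rho e ^ q)), <- Rpow_mult_distr, Rmult_assoc.
  apply Rmult_le_compat_l; [lra|].
  assert (Hb : 0 <= rho e ^ N * (rho e * rho e) * (X + 1) <= / 8).
  { split; [apply Rmult_le_pos; [apply Rmult_le_pos; [apply pow_le|]|]; nra|].
    replace (rho e ^ N * (rho e * rho e) * (X + 1)) with ((X + 1) * rho e ^ N * (rho e * rho e)) by ring.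
    assert (rho e * rho e <= /16) by nra. nra. }
  apply Rle_trans with ((/8) ^ n * (INR n + 1)).
  { apply Rmult_le_compat_r; [lra|]. apply pow_incr. lra. }
  replace ((/8) ^ n) with ((/2) ^ n * (/4) ^ n) by (rewrite <- Rpow_mult_distr; f_equal; lra).
  pose proof (succ_mul_pow_quarter_le n). assert (0 <= (/2) ^ n) by (apply pow_le; lra). nra.
Qed.

Lemma coef_diff_series (x : R -> C) : moderateC rho x -> forall q,
  ev0 (fun e =>
    (forall N, Cmod (sum_n (fun n => (b n e - a1 n e) * Cpow (x e) n)%C N) <= 2 * rho e ^ q) /\
    series_to (fun n => (b n e - a1 n e) * Cpow (x e) n)%C (csum (fun n => (b n e - a1 n e) * Cpow (x e) n)%C) /\
    Cmod (csum (fun n => (b n e - a1 n e) * Cpow (x e) n)%C) <= 2 * rho e ^ q).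
Proof.
  intros Hx q. apply ev0_impl with (1 := ev0_and _ _ (coef_diff_le x Hx q) rho_small).
  intros e _ [A1 A2]. set (f := fun n => ((b n e - a1 n e) * Cpow (x e) n)%C).
  assert (Ht : forall n, Cmod (f n) <= rho e ^ q * (/2) ^ n).
  { intros n. eapply Rle_trans; [|exact (A1 n)]. unfold f. rewrite Cmod_mult, Cmod_pow.
    apply Rmult_le_compat_l; [apply Cmod_ge_0|]. pose proof (pos_INR n).
    assert (Cmod (x e) ^ n <= (Cmod (x e) + 1) ^ n) by (apply pow_incr; pose proof (Cmod_ge_0 (x e)); lra).
    assert (0 <= Cmod (x e) ^ n) by (apply pow_le, Cmod_ge_0). nra. }
  assert (HP : forall N, Cmod (sum_n f N) <= 2 * rho e ^ q).
  { intros N. eapply Rle_trans; [apply Cmod_sum_n_le with (b := fun n => rho e ^ q * (/2) ^ n); auto|].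
    apply sum_n_geom_half_le. left; apply rho_pow_pos; auto. }
  destruct (series_to_of_majorant f (fun n => rho e ^ q * (/2) ^ n) Ht) as [l Hl].
  { apply ex_series_ext with (fun n => (/2) ^ n * rho e ^ q); [intros; apply Rmult_comm|].
    apply ex_series_scal_r, ex_series_geom. rewrite Rabs_pos_eq; lra. }
  rewrite (csum_spec _ l Hl). repeat split; auto. eapply series_to_Cmod_le; eauto.
Qed.

Let rad m e := Cmod (v e) + rho e ^ m / 2.

Lemma radius_majorant : exists m, ev0 (fun e => ex_series (majorant (coef e) (rad m e))).
Proof.
  destruct v_in_disc as [m Hm]. destruct (proj1 (moderateC_iff_mul rho rho_gauge v) v_moderate) as [Nv HNv].
  set (qq := (m + Nv + Nv + 3)%nat).
  exists m. apply ev0_impl with (1 := ev0_and _ _ Hm (ev0_and _ _ HNv (ev0_and _ _ (a1_a2 qq 0%nat) rho_small))).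
  intros e _ [A1 [A2 [A3 A4]]]. unfold rad.
  set (V := Cmod (v e)). set (s := rho e ^ m).
  assert (HV : 0 <= V) by apply Cmod_ge_0. assert (Hs : 0 < s) by (apply rho_pow_pos; auto).
  assert (Hka : 0 <= rho e ^ qq) by (left; apply rho_pow_pos; auto).
  destruct (pow_bound_of_lt_radius (fun n => a2 n e) (coef e) V s (rho e ^ qq)) as [n0 Hn0]; auto.
  - intros n _. unfold coef. specialize (A3 n).
    replace (a1 n e) with (a2 n e + (a1 n e - a2 n e))%C by ring.
    eapply Rle_trans; [apply Cmod_triangle|]. apply Rplus_le_compat_l.
    rewrite Nat.add_0_r, Nat.mul_comm, pow_mult in A3. exact A3.
  - assert (rho e ^ Nv <= 1) by (apply pow_le_one; lra). assert (s <= 1) by (apply pow_le_one; lra).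
    assert (H2 : (V + s) * rho e ^ Nv <= 2) by (unfold V; nra).
    assert (0 <= (V + s) * rho e ^ Nv) by (apply Rmult_le_pos; [lra|left; apply rho_pow_pos; auto]).
    replace (rho e ^ qq * (V + s) * (V + s))
      with (s * (rho e ^ 3 * (((V + s) * rho e ^ Nv) * ((V + s) * rho e ^ Nv))))
      by (unfold qq, s; rewrite !pow_add; ring).
    assert (rho e ^ 3 <= /64) by (cbn [pow]; nra). assert (0 < rho e ^ 3) by (apply rho_pow_pos; auto).
    assert (rho e ^ 3 * (((V + s) * rho e ^ Nv) * ((V + s) * rho e ^ Nv)) <= /64 * 4)
      by (apply Rmult_le_compat; nra).
    assert (s * (rho e ^ 3 * ((V + s) * rho e ^ Nv * ((V + s) * rho e ^ Nv))) <= s * (/64 * 4))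
      by (apply Rmult_le_compat_l; lra).
    lra.
  - apply majorant_summable_of_pow_bound with (r3 := V + 3 * s / 4); [lra|eauto].
Qed.

Lemma segment_in_disc m : ev0 (fun e => forall t, 0 <= t <= 1 -> Cmod (u1 e + RtoC t * du e) <= rad m e).
Proof.
  pose proof (proj1 (negligibleC_iff rho _) du_negligible (m + 3)%nat) as Hdu.
  pose proof (proj1 (negligibleC_iff rho _) z1c1_v (m + 3)%nat) as Hu1v.
  apply ev0_impl with (1 := ev0_and _ _ Hdu (ev0_and _ _ Hu1v rho_small)).
  intros e _ [A1 [A2 A3]] t Ht. unfold rad.
  replace (u1 e + RtoC t * du e)%C with (v e + (u1 e - v e) + RtoC t * du e)%C by ring.
  eapply Rle_trans; [apply Cmod_triangle|]. eapply Rle_trans; [apply Rplus_le_compat_r, Cmod_triangle|].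
  rewrite Cmod_mult, Cmod_R, Rabs_pos_eq by lra.
  assert (rho e ^ (m + 3) <= rho e ^ m / 8).
  { rewrite pow_add. assert (0 < rho e ^ m) by (apply rho_pow_pos; auto). cbn [pow].
    assert (rho e * (rho e * (rho e * 1)) <= /64) by nra. nra. }
  pose proof (Cmod_ge_0 (du e)). fold (u1 e) in A2. nra.
Qed.

Lemma u_u1_in_disc m : ev0 (fun e => Cmod (u e) <= rad m e /\ Cmod (u1 e) <= rad m e /\ 0 < rad m e).
Proof.
  apply ev0_impl with (1 := ev0_and _ _ (segment_in_disc m) rho_small). intros e _ [HS Hr].
  unfold rad. pose proof (Cmod_ge_0 (v e)). pose proof (rho_pow_pos rho m e Hr).
  split; [|split; [|lra]].
  - replace (u e) with (u1 e + RtoC 1 * du e)%C by (unfold du; ring). apply HS; lra.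
  - replace (u1 e) with (u1 e + RtoC 0 * du e)%C at 1 by ring. apply HS; lra.
Qed.

(** Condition (c) at a point [T e] chosen on the segment from [u1] to [u] by the mean value
    inequality turns [|F(u) - F(u1)| <= |u - u1| (|F'| + 1)] into a negligible bound. *)
Lemma pser_u_sub_u1_negligible m :
  ev0 (fun e => ex_series (majorant (coef e) (rad m e))) ->
  negligibleC rho (fun e => pser (coef e) (u e) - pser (coef e) (u1 e))%C.
Proof.
  intros Hm.
  set (Good := fun e => ex_series (majorant (coef e) (rad m e)) /\ 0 < rad m e /\
    forall t, 0 <= t <= 1 -> Cmod (u1 e + RtoC t * du e) <= rad m e).
  assert (HGood : ev0 Good).
  { apply ev0_impl with (1 := ev0_and _ _ Hm (ev0_and _ _ (segment_in_disc m) (u_u1_in_disc m))).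
    intros e _ [A1 [A2 [_ [_ A3]]]]. split; auto. }
  set (Pt := fun e t => 0 <= t <= 1 /\
    Cmod (pser (coef e) (u1 e + du e) - pser (coef e) (u1 e))
      <= Cmod (du e) * (Cmod (dpser (coef e) (u1 e + RtoC t * du e)) + 1)).
  set (T := fun e => epsilon (inhabits 0) (Pt e)).
  assert (HT : forall e, Good e -> Pt e (T e)).
  { intros e [G1 [G2 G3]]. apply epsilon_spec, (pser_sub_mean_value (coef e) (rad m e)); auto. }
  set (zt := fun e => (c1 e + u1 e + RtoC (T e) * du e)%C).
  assert (Hzt : eqC rho zt z1).
  { apply negligibleC_le with du; [|apply du_negligible].
    apply ev0_impl with (1 := HGood). intros e _ HG. destruct (HT e HG) as [Ht _].
    replace (zt e - z1 e)%C with (RtoC (T e) * du e)%C by (unfold zt, u1; ring).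
    rewrite Cmod_mult, Cmod_R, Rabs_pos_eq by lra. pose proof (Cmod_ge_0 (du e)). nra. }
  destruct (a1_condC zt Hzt) as [dz [Hdz Hser]].
  apply (negligibleC_le2 rho rho_gauge) with (fun e => du e * dz e)%C du.
  - apply ev0_impl with (1 := ev0_and _ _ HGood Hser). intros e _ [HG HS].
    destruct (HT e HG) as [_ Hb].
    assert (Hdz_eq : dpser (coef e) (u1 e + RtoC (T e) * du e) = dz e).
    { apply csum_spec. apply series_to_ext with (2 := HS). intros n. unfold dpser_term, coef.
      replace (zt e - c1 e)%C with (u1 e + RtoC (T e) * du e)%C by (unfold zt; ring). reflexivity. }
    rewrite Hdz_eq in Hb. replace (u e) with (u1 e + du e)%C by (unfold du; ring).
    rewrite Cmod_mult. pose proof (Cmod_ge_0 (du e)). nra.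
  - apply (negligibleC_mul rho rho_gauge); auto. apply du_negligible.
Qed.

Lemma sum_coef_diff_negligible (K : R -> nat) :
  negligibleC rho (fun e => sum_n (fun n => (b n e - a1 n e) * Cpow (u e) n)%C (K e)).
Proof.
  apply negligibleC_iff. intros q.
  apply ev0_impl with (1 := ev0_and _ _ (coef_diff_series u u_moderate (S q)) rho_small).
  intros e _ [[A1 _] A2]. specialize (A1 (K e)).
  pose proof (rho_pow_S_le rho q e A2). pose proof (rho_pow_pos rho q e A2). lra.
Qed.

(** Condition (a) at [a1, z1, c1], evaluated at the hypernatural where the partial sums up to [K]
    are largest, bounds all of them; [du] is so small that this suffices. *)
Lemma sum_point_diff_negligible (K : R -> nat) : hypnat rho K ->
  negligibleC rho (fun e => sum_n (fun n => a1 n e * (Cpow (u e) n - Cpow (u1 e) n))%C (K e)).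
Proof.
  intros HK. destruct (weakly_moderate_mul rho rho_gauge a1 a1_weak) as [Q [R0 HW]].
  pose proof HK as HK'. apply (moderateR_iff_mul rho rho_gauge) in HK'. destruct HK' as [NK HNK].
  set (Tm := fun e m => sum_n (fun n => a1 n e * Cpow (u1 e) n)%C m).
  set (Km := fun e => argmax_upto (fun m => Cmod (Tm e m)) (K e)).
  assert (HKm : hypnat rho Km) by (apply (hypnat_le rho rho_gauge K); auto; intros; apply argmax_upto_le).
  pose proof (a1_condA Km HKm) as HAm. apply (moderateC_iff_mul rho rho_gauge) in HAm. destruct HAm as [NB HNB].
  pose proof (proj1 (negligibleC_iff rho du) du_negligible (NK + (Q + 2) + 1)%nat) as Hdu.
  apply (negligibleC_of_mul_pow_le rho rho_gauge) with (E := (NK + (Q + 2) + R0 + NB)%nat) (d := du);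
    [|apply du_negligible].
  apply ev0_impl with (1 := ev0_and _ _ HW (ev0_and _ _ HNK (ev0_and _ _ HNB (ev0_and _ _ Hdu rho_small)))).
  intros e _ [A1 [A2 [A3 [A4 A5]]]].
  set (Bd := Cmod (Tm e (Km e))).
  change (Cmod (hsum (pterms a1 z1 c1) (fun _ => 0%nat) Km e) * rho e ^ NB <= 1) with (Bd * rho e ^ NB <= 1) in A3.
  rewrite Rabs_pos_eq in A2 by apply pos_INR.
  assert (Hdu1 : Cmod (u e - u1 e) <= / 2 * rho e ^ (NK + (Q + 2))).
  { change (Cmod (du e) <= / 2 * rho e ^ (NK + (Q + 2))).
    rewrite (pow_add _ (NK + (Q + 2))) in A4. cbn [pow] in A4.
    assert (0 < rho e ^ (NK + (Q + 2))) by (apply rho_pow_pos; auto). nra. }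
  assert (HT : forall m, (m <= K e)%nat -> Cmod (sum_n (fun n => coef e n * Cpow (u1 e) n)%C m) <= Bd)
    by (intros m Hm; apply (le_argmax_upto (fun m => Cmod (Tm e m)) (K e) m Hm)).
  pose proof (Cmod_sum_n_mul_Cpow_sub_le (coef e) (u e) (u1 e) (K e) Bd (rho e) Q R0 NK A5 A1 HT A2 Hdu1) as HP.
  fold (du e) in HP. unfold coef in HP.
  set (X := Cmod (sum_n (fun n => a1 n e * (Cpow (u e) n - Cpow (u1 e) n))%C (K e))) in *.
  assert (0 <= X) by apply Cmod_ge_0. assert (0 <= Bd) by apply Cmod_ge_0.
  assert (0 < rho e ^ NB) by (apply rho_pow_pos; auto). assert (rho e ^ NB <= 1) by (apply pow_le_one; lra).
  pose proof (Cmod_ge_0 (du e)).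
  rewrite (pow_add (rho e) (NK + (Q + 2) + R0) NB), <- Rmult_assoc.
  apply Rle_trans with (4 * (Bd + 1) * Cmod (du e) * rho e ^ NB); [apply Rmult_le_compat_r; lra|].
  assert ((Bd + 1) * rho e ^ NB <= 2) by nra. nra.
Qed.

Lemma hsums_close_b_a1 : hsums_close rho (pterms b y d) (pterms a1 z1 c1).
Proof.
  intros K HK.
  apply negligibleC_ext with (fun e => sum_n (fun n => (b n e - a1 n e) * Cpow (u e) n)%C (K e) +
                                       sum_n (fun n => a1 n e * (Cpow (u e) n - Cpow (u1 e) n))%C (K e))%C.
  { intros e. unfold hsum, pterms. change (sum_n_m ?f 0 ?k) with (sum_n f k).
    rewrite <- Csum_n_plus, <- Csum_n_minus. apply Csum_n_ext_loc. intros; unfold u, u1; ring. }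
  apply (negligibleC_plus rho rho_gauge).
  - apply sum_coef_diff_negligible.
  - apply sum_point_diff_negligible, HK.
Qed.

Lemma condA_b : condA rho b y d.
Proof.
  intros N HN. apply (moderateC_ext rho rho_gauge) with
    (fun e => hsum (pterms a1 z1 c1) (fun _ => 0%nat) N e +
              (hsum (pterms b y d) (fun _ => 0%nat) N e - hsum (pterms a1 z1 c1) (fun _ => 0%nat) N e))%C;
    [intros; ring|].
  apply (moderateC_plus rho rho_gauge); auto.
  apply (negligibleC_moderateC rho rho_gauge), hsums_close_b_a1, HN.
Qed.

(** The sum for [b, y, d] is [F(u) + E] where [F] is the power series of [a1] and [E] the
    negligible series of the coefficient differences; it differs negligibly from the sum
    for [a1, z1, c1], which is [F(u1)]. *)
Lemma condB_b : condB rho b y d.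
Proof.
  destruct radius_majorant as [m Hm].
  pose proof (pser_u_sub_u1_negligible m Hm) as Hpser.
  destruct a1_condB as [l1 [Hl1 [Hser1 Hhyp1]]].
  set (E := fun e => csum (fun n => (b n e - a1 n e) * Cpow (u e) n)%C).
  set (l := fun e => (pser (coef e) (u e) + E e)%C).
  assert (HEn : negligibleC rho E).
  { apply negligibleC_iff. intros q.
    apply ev0_impl with (1 := ev0_and _ _ (coef_diff_series u u_moderate (S q)) rho_small).
    intros e _ [[_ [_ A1]] A2]. pose proof (rho_pow_S_le rho q e A2). pose proof (rho_pow_pos rho q e A2).
    fold (E e) in A1. lra. }
  assert (Heq : ev0 (fun e => (l1 e + ((pser (coef e) (u e) - pser (coef e) (u1 e)) + E e))%C = l e)).
  { apply ev0_impl with (1 := ev0_and _ _ (ev0_and _ _ Hm (u_u1_in_disc m)) Hser1).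
    intros e _ [[R1 [R2 [R3 R4]]] S1].
    assert (Hl1e : pser (coef e) (u1 e) = l1 e).
    { apply (series_to_unique _ _ _ (pser_spec _ _ R4 R1 (u1 e) R3)).
      apply series_to_ext with (2 := S1). intros; reflexivity. }
    unfold l. rewrite Hl1e. ring. }
  assert (Hll1 : negligibleC rho (fun e => l e - l1 e)%C).
  { apply (negligibleC_ev_ext rho) with (fun e => (pser (coef e) (u e) - pser (coef e) (u1 e)) + E e)%C.
    - apply ev0_impl with (1 := Heq). intros e _ H. rewrite <- H. ring.
    - apply (negligibleC_plus rho rho_gauge); auto. }
  exists l. split; [|split].
  - apply (moderateC_ev_ext rho rho_gauge) with (1 := Heq). apply (moderateC_plus rho rho_gauge); auto.
    apply (negligibleC_moderateC rho rho_gauge), (negligibleC_plus rho rho_gauge); auto.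
  - apply ev0_impl with (1 := ev0_and _ _ (ev0_and _ _ Hm (u_u1_in_disc m)) (coef_diff_series u u_moderate 0%nat)).
    intros e _ [[R1 [R2 [R3 R4]]] [_ [S2 _]]].
    apply series_to_ext with (fun n => (coef e n * Cpow (u e) n) + ((b n e - a1 n e) * Cpow (u e) n))%C.
    { intros n. unfold pterms, coef. fold (u e). ring. }
    apply series_to_plus; auto. apply (pser_spec _ (rad m e)); auto.
  - apply hyperseries_to_close with (pterms a1 z1 c1) l1; auto. apply hsums_close_b_a1.
Qed.

Let coef_diff_dterm (x : R -> C) e n := (RtoC (INR n) * (b n e - a1 n e) * Cpow (x e) (n - 1))%C.

Lemma coef_diff_dseries (x : R -> C) : moderateC rho x ->
  ev0 (fun e => series_to (coef_diff_dterm x e) (csum (coef_diff_dterm x e)) /\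
                Cmod (csum (coef_diff_dterm x e)) <= 2).
Proof.
  intros Mx. apply ev0_impl with (1 := coef_diff_le x Mx 0%nat). intros e _ A1.
  set (g := coef_diff_dterm x e).
  assert (Ht : forall n, Cmod (g n) <= 1 * (/2) ^ n).
  { intros n. specialize (A1 n). cbn [pow] in A1. rewrite Rmult_1_l in A1 |- *. unfold g, coef_diff_dterm.
    rewrite !Cmod_mult, Cmod_pow, Cmod_R, Rabs_pos_eq by apply pos_INR. eapply Rle_trans; [|exact A1].
    pose proof (pos_INR n). pose proof (Cmod_ge_0 (b n e - a1 n e)). pose proof (Cmod_ge_0 (x e)).
    assert (Cmod (x e) ^ (n - 1) <= (Cmod (x e) + 1) ^ n).
    { apply Rle_trans with ((Cmod (x e) + 1) ^ (n - 1)); [apply pow_incr; lra|apply Rle_pow; [lra|lia]]. }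
    assert (0 <= Cmod (x e) ^ (n - 1)) by (apply pow_le; lra).
    replace (INR n * Cmod (b n e - a1 n e) * Cmod (x e) ^ (n - 1))
      with (Cmod (b n e - a1 n e) * (Cmod (x e) ^ (n - 1) * INR n)) by ring.
    apply Rmult_le_compat_l; auto. apply Rmult_le_compat; lra. }
  destruct (series_to_of_majorant g (fun n => 1 * (/2) ^ n)) as [l Hl]; auto.
  { apply ex_series_ext with (fun n => (/2) ^ n * 1); [intros; apply Rmult_comm|].
    apply ex_series_scal_r, ex_series_geom. rewrite Rabs_pos_eq; lra. }
  rewrite (csum_spec _ l Hl). split; auto. apply (series_to_Cmod_le _ _ _) with (2 := Hl).
  intros N. replace 2 with (2 * 1) by ring.
  eapply Rle_trans; [apply Cmod_sum_n_le with (b := fun n => 1 * (/2) ^ n); intros; apply Ht|].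
  apply sum_n_geom_half_le; lra.
Qed.

Lemma condC_b : condC rho b y d.
Proof.
  intros yt Hyt.
  set (x := fun e => (yt e - d e)%C).
  set (zt := fun e => (x e + c1 e)%C).
  assert (Hx : eqC rho x u) by (apply (eqC_minus rho rho_gauge); [exact Hyt|apply eqC_refl; auto]).
  assert (Hzt : eqC rho zt z1).
  { apply negligibleC_ext with (fun e => (x e - u e) + du e)%C; [intros e; unfold zt, du, u1; ring|].
    apply (negligibleC_plus rho rho_gauge); [exact Hx|apply du_negligible]. }
  destruct (a1_condC zt Hzt) as [dz [Hdz Hser]].
  assert (Mx : moderateC rho x) by (apply (eqC_moderateC rho rho_gauge u); [apply eqC_sym|apply u_moderate]; auto).
  pose proof (coef_diff_dseries x Mx) as Hg.
  exists (fun e => dz e + csum (coef_diff_dterm x e))%C. split.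
  - apply (moderateC_plus rho rho_gauge); auto. apply (moderateC_iff_mul rho rho_gauge). exists 1%nat.
    apply ev0_impl with (1 := ev0_and _ _ Hg rho_small). intros e _ [[_ A1] A2].
    cbn [pow]. nra.
  - apply ev0_impl with (1 := ev0_and _ _ Hg Hser). intros e _ [[A1 _] A2].
    apply series_to_ext with
      (fun n => (RtoC (INR n) * a1 n e * Cpow (zt e - c1 e) (n - 1)) + coef_diff_dterm x e n)%C.
    { intros n. unfold coef_diff_dterm. replace (zt e - c1 e)%C with (x e) by (unfold zt; ring).
      unfold x. ring. }
    apply series_to_plus; auto.
Qed.

Lemma representative_conditions :
  (condA rho b y d /\ condB rho b y d /\ condC rho b y d) /\
  hsums_close rho (pterms b y d) (pterms a1 z1 c1).
Proof. split; [split; [apply condA_b|split; [apply condB_b|apply condC_b]]|apply hsums_close_b_a1]. Qed.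

End Representatives.

Lemma in_S_representative rho a z c b y d :
  is_gauge rho -> weakly_moderate rho a -> moderateC rho z -> moderateC rho c ->
  strong_eq rho a b -> eqC rho z y -> eqC rho c d -> in_S rho a z c ->
  (condA rho b y d /\ condB rho b y d /\ condC rho b y d) /\
  hsums_close rho (pterms b y d) (pterms a z c).
Proof.
  intros Hg Ha Hz Hc Hab Hzy Hcd
    [[a2 [z2 [c2 [Ha2 [Hz2 [Hc2 Hrad]]]]]] [a1 [z1 [c1 [Ha1 [Hz1 [Hc1 [HA [HB HC]]]]]]]]].
  assert (Hzc1 : eqC rho (fun e => z e - c e)%C (fun e => z1 e - c1 e)%C) by (apply eqC_minus; auto).
  assert (Hzc2 : eqC rho (fun e => z e - c e)%C (fun e => z2 e - c2 e)%C) by (apply eqC_minus; auto).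
  assert (Hzyc : eqC rho (fun e => z e - c e)%C (fun e => y e - d e)%C) by (apply eqC_minus; auto).
  assert (H12 : eqC rho (fun e => z1 e - c1 e)%C (fun e => z2 e - c2 e)%C)
    by (eapply eqC_trans; [auto|apply eqC_sym, Hzc1|exact Hzc2]).
  assert (Hv : moderateC rho (fun e => z2 e - c2 e)%C)
    by (eapply eqC_moderateC; [auto|exact Hzc2|apply moderateC_minus; auto]).
  assert (Ha1w : weakly_moderate rho a1) by (eapply weakly_moderate_strong_eq; eauto).
  assert (Ha12 : strong_eq rho a1 a2) by (eapply strong_eq_trans; [auto|apply strong_eq_sym|]; eauto).
  assert (Hba1 : strong_eq rho b a1) by (eapply strong_eq_trans; [auto|apply strong_eq_sym|]; eauto).
  destruct (representative_conditions rho a1 a2 b z1 c1 y d _ Hg Ha1w Hba1 Ha12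
              ltac:(eapply eqC_trans; [auto|apply eqC_sym, Hzyc|exact Hzc1]) H12 Hv Hrad HA HB HC)
    as [Hconds Hclose].
  destruct (representative_conditions rho a1 a2 a z1 c1 z c _ Hg Ha1w Ha1 Ha12 Hzc1 H12 Hv Hrad HA HB HC)
    as [_ Hclose'].
  split; [exact Hconds|]. eapply hsums_close_trans; [auto|exact Hclose|apply hsums_close_sym; auto].
Qed.

Theorem theorem2p27 (rho : R -> R) (a ah : nat -> R -> C) (z zh c ch : R -> C) :
  is_gauge rho ->
  weakly_moderate rho a -> weakly_moderate rho ah -> strong_eq rho a ah ->
  moderateC rho z -> moderateC rho zh -> eqC rho z zh ->
  moderateC rho c -> moderateC rho ch -> eqC rho c ch ->
  in_S rho a z c ->
  ((condA rho a z c /\ condB rho a z c /\ condC rho a z c) /\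
   (condA rho ah zh ch /\ condB rho ah zh ch /\ condC rho ah zh ch)) /\
  eq_s rho (pterms a z c) (pterms ah zh ch).
Proof.
  intros Hg Ha _ Hah Hz _ Hzh Hc _ Hch HS.
  destruct (in_S_representative rho a z c a z c Hg Ha Hz Hc (strong_eq_refl rho Hg a)
              (eqC_refl rho Hg z) (eqC_refl rho Hg c) HS) as [Hconds _].
  destruct (in_S_representative rho a z c ah zh ch Hg Ha Hz Hc Hah Hzh Hch HS) as [Hconds' Hclose].
  split; [split; assumption|].
  apply eq_s_of_hsums_close; auto. apply hsums_close_sym; auto.
Qed.
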